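(* Let $Z=(z_1,\dots,z_N)$, $z_k:\mathbb T\to\mathbb R^2$, satisfy $|||Z|||<\infty$ (so the $z_k$ are pairwise disjoint simple closed curves). Let $\Omega_k$ be the interior of the curve $z_k$ and $y_k$ any constant speed parametrization of $\partial\Omega_k$, and $Y=(y_1,\dots,y_N)$. There is a universal constant $C\ge1$ such that $|||Y|||\le C|||Z|||^8$.
   Context: $\mathbb T=[-\pi,\pi]$, endpoints identified. Constant speed parametrization of $\partial\Omega$: counter-clockwise $y:\mathbb T\to\mathbb R^2$ with $|y'|\equiv|\partial\Omega|/2\pi$. For $Z=\{z_k\}$: $\|Z\|_{H^3}^2:=\sum_k(\|z_k\|_{L^\infty}^2+\|z_k'''\|_{L^2}^2)$; $\delta[Z]:=\min\{\min_{i\ne k}\min_{\xi,\eta}|z_i(\xi)-z_k(\eta)|,1\}$ ($:=1$ if $N=1$); $F[Z]:=\max\{\max_k\sup_{\xi,\eta\in\mathbb T,\eta\ne0}\frac{|\eta|}{|z_k(\xi)-z_k(\xi-\eta)|},1\}$; $|||Z|||:=\|Z\|_{H^3}+\delta[Z]^{-1}+F[Z]$. *)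

From Stdlib Require Import Reals Lra List.
Open Scope R_scope.

(** Points of R^2 and curves T -> R^2 (represented as 2pi-periodic maps R -> R^2). *)
Definition pt := (R * R)%type.
Definition curve := R -> pt.

Definition vsub (p q : pt) : pt := (fst p - fst q, snd p - snd q).
Definition vadd (p q : pt) : pt := (fst p + fst q, snd p + snd q).
Definition vscale (a : R) (p : pt) : pt := (a * fst p, a * snd p).
Definition vnorm2 (p : pt) : R := fst p * fst p + snd p * snd p.
Definition vnorm (p : pt) : R := sqrt (vnorm2 p).
Definition vdist (p q : pt) : R := vnorm (vsub p q).
Definition Jrot (p : pt) : pt := (- snd p, fst p).

Definition inT (x : R) : Prop := - PI <= x <= PI.
Definition periodic (z : curve) : Prop := forall t, z (t + 2 * PI) = z t.

Definition Dc (z w : curve) : Prop :=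
  (forall t, derivable_pt_lim (fun s => fst (z s)) t (fst (w t))) /\
  (forall t, derivable_pt_lim (fun s => snd (z s)) t (snd (w t))).

Definition is_glb (E : R -> Prop) (m : R) : Prop :=
  (forall x, E x -> m <= x) /\ (forall b, (forall x, E x -> b <= x) -> b <= m).

Definition Linf (z : curve) (a : R) : Prop :=
  is_lub (fun r => exists t, inT t /\ r = vnorm (z t)) a.

Fixpoint rsum (g : curve) (a : R) (l : list R) : R :=
  match l with
  | nil => 0
  | b :: l' => vnorm2 (vsub (g b) (g a)) / (b - a) + rsum g b l'
  end.
Fixpoint incr_from (a : R) (l : list R) : Prop :=
  match l with
  | nil => True
  | b :: l' => a < b /\ incr_from b l'
  end.
(** partitions -pi = t_0 < t_1 < ... < t_n = pi (t_0 omitted from the list) *)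
Definition partition (l : list R) : Prop :=
  l <> nil /\ incr_from (- PI) l /\ last l 0 = PI.

(** ||z'''||_{L^2(T)} = b, via F. Riesz' characterisation:
    ||f'||_{L^2}^2 = sup over partitions of the Riesz sums of f (f = z''),
    finite iff f is absolutely continuous with f' in L^2. *)
Definition L2third (z : curve) (b : R) : Prop :=
  exists z1 z2, Dc z z1 /\ Dc z1 z2 /\
    exists S, is_lub (fun r => exists l, partition l /\ r = rsum z2 (- PI) l) S /\
              b = sqrt S.

Fixpoint sumN (n : nat) (f : nat -> R) : R :=
  match n with O => 0 | S m => sumN m f + f m end.

Definition H3norm (N : nat) (Z : nat -> curve) (h : R) : Prop :=
  (forall k, (k < N)%nat -> periodic (Z k)) /\
  exists a b : nat -> R,
    (forall k, (k < N)%nat -> Linf (Z k) (a k) /\ L2third (Z k) (b k)) /\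
    h = sqrt (sumN N (fun k => a k * a k + b k * b k)).

Definition deltaVal (N : nat) (Z : nat -> curve) (d : R) : Prop :=
  ((N <= 1)%nat /\ d = 1) \/
  ((2 <= N)%nat /\ exists m,
     is_glb (fun r => exists i k xi eta, (i < N)%nat /\ (k < N)%nat /\ i <> k /\
                        inT xi /\ inT eta /\ r = vdist (Z i xi) (Z k eta)) m /\
     d = Rmin m 1).

(** F[Z] = f (finite; in particular all the quotients are defined) *)
Definition FVal (N : nat) (Z : nat -> curve) (f : R) : Prop :=
  (forall k xi eta, (k < N)%nat -> inT xi -> inT eta -> eta <> 0 ->
      Z k xi <> Z k (xi - eta)) /\
  is_lub (fun r => r = 1 \/
            exists k xi eta, (k < N)%nat /\ inT xi /\ inT eta /\ eta <> 0 /\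
              r = Rabs eta / vdist (Z k xi) (Z k (xi - eta))) f.

Definition triple_norm (N : nat) (Z : nat -> curve) (w : R) : Prop :=
  exists h d f, H3norm N Z h /\ deltaVal N Z d /\ 0 < d /\ FVal N Z f /\
    w = h + / d + f.

(** Interior of a closed curve: points off the curve whose path component
    in the complement of the curve is bounded. *)
Definition on_curve (z : curve) (p : pt) : Prop := exists t, z t = p.
Definition joinable_avoiding (z : curve) (p q : pt) : Prop :=
  exists g : R -> pt,
    continuity (fun s => fst (g s)) /\ continuity (fun s => snd (g s)) /\
    g 0 = p /\ g 1 = q /\ (forall s, 0 <= s <= 1 -> ~ on_curve z (g s)).
Definition curve_interior (z : curve) (p : pt) : Prop :=
  ~ on_curve z p /\ exists M, forall q, joinable_avoiding z p q -> vnorm q <= M.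

Definition boundary (S : pt -> Prop) (p : pt) : Prop :=
  forall eps, 0 < eps ->
    (exists q, S q /\ vdist p q < eps) /\ (exists q, ~ S q /\ vdist p q < eps).

Definition const_speed_param (Om : pt -> Prop) (y : curve) : Prop :=
  periodic y /\
  (forall s t, - PI <= s < PI -> - PI <= t < PI -> y s = y t -> s = t) /\
  (forall p, boundary Om p <-> on_curve y p) /\
  exists y1, Dc y y1 /\
    (exists c, forall t, vnorm (y1 t) = c) /\
    (* counter-clockwise: the left normal points into Om *)
    (forall t, exists e0, 0 < e0 /\
       forall e, 0 < e < e0 -> Om (vadd (y t) (vscale e (Jrot (y1 t))))).

(* Each y_k traces the curve z_k, so ||y_k||_{L^infty} <= ||z_k||_{L^infty} and delta[Y] >= delta[Z].
   The arc-chord bound F makes z_k locally injective with |z_k'| >= 1/F, so y_k = z_k o th for a C^1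
   lift th.  As |y_k'| = c is constant and y_k is injective, th' = +-c / |z_k' o th| has constant
   sign, th has degree +-1 and 1/F <= c <= C ||z_k'''||; this gives F[Y] <= C F^2 ||z_k'''||.
   Moreover y_k'' = c^2 G(z_k' o th, z_k'' o th) for an explicit rational map G that is Lipschitz
   where |z_k'| >= 1/F.  Measuring ||.'''||_{L^2} by Riesz sums of the second derivative, the sums
   for y_k'' are controlled by those for z_k'' plus the total variation 2 PI of th, so that
   ||y_k'''||^2 <= C (||z_k'''||^7 F^5 + ||z_k'''||^9 F^7). *)

From Stdlib Require Import Reals Lra Lia Psatz ZArith List ClassicalEpsilon.
Open Scope R_scope.

Lemma Rdiv_le_0_compat a b : 0 <= a -> 0 < b -> 0 <= a / b.
Proof. intros. apply Rmult_le_pos; [|left; apply Rinv_0_lt_compat]; auto. Qed.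

Lemma Rabs_le_inv a b : Rabs a <= b -> - b <= a <= b.
Proof.
  intros H. pose proof (Rle_abs a). pose proof (Rle_abs (-a)). rewrite Rabs_Ropp in H1. lra.
Qed.

Lemma sqrt_le_of_sq a b : 0 <= b -> a <= b * b -> sqrt a <= b.
Proof. intros Hb H. rewrite <- (sqrt_square b) by lra. apply sqrt_le_1_alt. lra. Qed.

Lemma Rabs_le_of_sq x y : 0 <= y -> x * x <= y * y -> Rabs x <= y.
Proof.
  intros Hy H. rewrite <- (sqrt_square y), <- sqrt_Rsqr_abs by auto.
  apply sqrt_le_1_alt. unfold Rsqr; lra.
Qed.

Lemma IZR_bounded_0 (k : Z) : -1 < IZR k < 1 -> k = 0%Z.
Proof. intros [H1 H2]. apply lt_IZR in H1, H2. lia. Qed.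

Lemma exists_round (x : R) : exists k : Z, Rabs (x - IZR k) <= / 2.
Proof.
  destruct (archimed (x + /2)) as [H1 H2].
  exists (up (x + /2) - 1)%Z. rewrite minus_IZR. apply Rabs_le. lra.
Qed.

Lemma exists_shift_into_T t : exists k : Z, - PI <= t + 2 * PI * IZR k < PI.
Proof.
  pose proof PI_RGT_0.
  destruct (archimed ((t + PI) / (2 * PI))) as [H1 H2].
  exists (- (up ((t + PI) / (2 * PI)) - 1))%Z.
  rewrite opp_IZR, minus_IZR.
  set (u := IZR (up ((t + PI) / (2 * PI)))) in *.
  assert (E : t + PI = 2 * PI * ((t + PI) / (2 * PI))) by (field; lra).
  split; nra.
Qed.

Lemma Rle_sqrt_scale x K w : 0 <= x -> 1 <= K -> 0 <= w -> x <= K * (w * w) -> sqrt x <= K * w.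
Proof. intros Hx HK Hw H. apply sqrt_le_of_sq; nra. Qed.

Lemma exists_is_lub (E : R -> Prop) : (exists x, E x) -> (exists M, forall x, E x -> x <= M) ->
  exists l, is_lub E l.
Proof.
  intros Hne [M HM]. destruct (completeness E) as [l Hl]; [exists M; exact HM|auto|].
  exists l; auto.
Qed.

Lemma exists_is_glb (E : R -> Prop) : (exists x, E x) -> (exists m, forall x, E x -> m <= x) ->
  exists g, is_glb E g.
Proof.
  intros [x Ex] [m Hm].
  destruct (completeness (fun r => E (- r))) as [l [Hl1 Hl2]].
  - exists (- m). intros r Er. specialize (Hm _ Er). lra.
  - exists (- x). rewrite Ropp_involutive. auto.
  - exists (- l). split.
    + intros y Ey. assert (- y <= l) by (apply Hl1; rewrite Ropp_involutive; auto). lra.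
    + intros b Hb. assert (l <= - b) by (apply Hl2; intros r Er; specialize (Hb _ Er); lra). lra.
Qed.

Lemma sumN_le n (g g' : nat -> R) : (forall k, (k < n)%nat -> g k <= g' k) -> sumN n g <= sumN n g'.
Proof.
  induction n as [|n IH]; intros H; simpl; [lra|].
  apply Rplus_le_compat; [apply IH; intros|apply H]; auto.
Qed.

Lemma sumN_scal n (g : nat -> R) a : sumN n (fun k => a * g k) = a * sumN n g.
Proof. induction n as [|n IH]; simpl; [ring|]. rewrite IH. ring. Qed.

Lemma sumN_nonneg n (g : nat -> R) : (forall k, (k < n)%nat -> 0 <= g k) -> 0 <= sumN n g.
Proof.
  induction n as [|n IH]; intros H; simpl; [lra|].
  pose proof (H n ltac:(lia)). assert (0 <= sumN n g) by (apply IH; auto). lra.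
Qed.

Lemma le_sumN n (g : nat -> R) k : (forall j, (j < n)%nat -> 0 <= g j) -> (k < n)%nat -> g k <= sumN n g.
Proof.
  induction n as [|n IH]; intros H Hk; [lia|]. simpl.
  pose proof (sumN_nonneg n g ltac:(auto)).
  destruct (Nat.eq_dec k n) as [->|NE]; [lra|].
  pose proof (H n ltac:(lia)). assert (g k <= sumN n g) by (apply IH; [auto|lia]). lra.
Qed.

(** * Plane geometry *)

Definition dotp (p q : pt) : R := fst p * fst q + snd p * snd q.
Definition cross (p q : pt) : R := fst p * snd q - snd p * fst q.

Lemma vnorm2_nonneg p : 0 <= vnorm2 p.
Proof. unfold vnorm2; nra. Qed.

Lemma vnorm_nonneg p : 0 <= vnorm p.
Proof. apply sqrt_pos. Qed.

Lemma vnorm_sq p : vnorm p * vnorm p = vnorm2 p.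
Proof. apply sqrt_sqrt, vnorm2_nonneg. Qed.

Lemma vnorm_fst p : Rabs (fst p) <= vnorm p.
Proof. apply Rabs_le_of_sq; [apply vnorm_nonneg|]. rewrite vnorm_sq. unfold vnorm2; nra. Qed.

Lemma vnorm_snd p : Rabs (snd p) <= vnorm p.
Proof. apply Rabs_le_of_sq; [apply vnorm_nonneg|]. rewrite vnorm_sq. unfold vnorm2; nra. Qed.

Lemma vnorm_le_of_comp p a : 0 <= a -> Rabs (fst p) <= a -> Rabs (snd p) <= a -> vnorm p <= 2 * a.
Proof.
  intros Ha H1 H2. apply Rabs_le_inv in H1, H2.
  apply sqrt_le_of_sq; [lra|]. unfold vnorm2. nra.
Qed.

Lemma vnorm2_le_of_vnorm p a : vnorm p <= a -> vnorm2 p <= a * a.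
Proof. intros H. rewrite <- vnorm_sq. pose proof (vnorm_nonneg p). nra. Qed.

Lemma vnorm_pos p : vnorm2 p <> 0 -> 0 < vnorm p.
Proof. intros H. apply sqrt_lt_R0. pose proof (vnorm2_nonneg p). lra. Qed.

Lemma vnorm2_pos_of_vnorm p : 0 < vnorm p -> vnorm2 p = vnorm p * vnorm p /\ vnorm2 p <> 0.
Proof. intros H. rewrite vnorm_sq. split; auto. rewrite <- vnorm_sq. nra. Qed.

Lemma dotp_bound p q : Rabs (dotp p q) <= vnorm p * vnorm q.
Proof.
  pose proof (vnorm_nonneg p); pose proof (vnorm_nonneg q).
  apply Rabs_le_of_sq; [nra|].
  replace (vnorm p * vnorm q * (vnorm p * vnorm q)) with ((vnorm p * vnorm p) * (vnorm q * vnorm q)) by ring.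
  rewrite !vnorm_sq. unfold dotp, vnorm2. destruct p as [a b], q as [c d]; simpl.
  pose proof (Rle_0_sqr (a * d - b * c)). unfold Rsqr in *. nra.
Qed.

Lemma cross_bound p q : Rabs (cross p q) <= vnorm p * vnorm q.
Proof.
  pose proof (vnorm_nonneg p); pose proof (vnorm_nonneg q).
  apply Rabs_le_of_sq; [nra|].
  replace (vnorm p * vnorm q * (vnorm p * vnorm q)) with ((vnorm p * vnorm p) * (vnorm q * vnorm q)) by ring.
  rewrite !vnorm_sq. unfold cross, vnorm2. destruct p as [a b], q as [c d]; simpl.
  pose proof (Rle_0_sqr (a * c + b * d)). unfold Rsqr in *. nra.
Qed.

Lemma vnorm_triangle p q : vnorm (vadd p q) <= vnorm p + vnorm q.
Proof.
  pose proof (vnorm_nonneg p); pose proof (vnorm_nonneg q).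
  apply sqrt_le_of_sq; [lra|].
  pose proof (dotp_bound p q). pose proof (Rle_abs (dotp p q)).
  pose proof (vnorm_sq p). pose proof (vnorm_sq q).
  unfold vnorm2, vadd, dotp in *; simpl. nra.
Qed.

Lemma vnorm_scale a p : vnorm (vscale a p) = Rabs a * vnorm p.
Proof.
  unfold vnorm, vnorm2, vscale; simpl.
  replace (a * fst p * (a * fst p) + a * snd p * (a * snd p)) with
    ((a * a) * (fst p * fst p + snd p * snd p)) by ring.
  rewrite sqrt_mult_alt by nra. rewrite <- sqrt_Rsqr_abs. reflexivity.
Qed.

Lemma vnorm2_scale a p : vnorm2 (vscale a p) = a * a * vnorm2 p.
Proof. unfold vnorm2, vscale; simpl. ring. Qed.

Lemma vsub_scale a p q : vsub (vscale a p) (vscale a q) = vscale a (vsub p q).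
Proof. unfold vsub, vscale; simpl. f_equal; ring. Qed.

Lemma vnorm2_vsub_sym p q : vnorm2 (vsub p q) = vnorm2 (vsub q p).
Proof. unfold vnorm2, vsub; simpl. ring. Qed.

Lemma vnorm_vsub_sym p q : vnorm (vsub p q) = vnorm (vsub q p).
Proof. unfold vnorm. rewrite vnorm2_vsub_sym. auto. Qed.

Lemma vadd_vsub_cancel p q : vadd q (vsub p q) = p.
Proof. destruct p, q; unfold vadd, vsub; simpl; f_equal; ring. Qed.

Lemma vnorm_vsub_le p q : vnorm (vsub p q) <= vnorm p + vnorm q.
Proof.
  replace (vsub p q) with (vadd p (vscale (-1) q)) by (unfold vsub, vadd, vscale; simpl; f_equal; ring).
  eapply Rle_trans; [apply vnorm_triangle|]. rewrite vnorm_scale, Rabs_left by lra. lra.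
Qed.

Lemma vnorm_rev_triangle p q : Rabs (vnorm p - vnorm q) <= vnorm (vsub p q).
Proof.
  assert (H1 : vnorm p <= vnorm (vsub p q) + vnorm q).
  { replace p with (vadd (vsub p q) q) at 1 by (destruct p, q; unfold vadd, vsub; simpl; f_equal; ring).
    apply vnorm_triangle. }
  assert (H2 : vnorm q <= vnorm (vsub p q) + vnorm p).
  { rewrite vnorm_vsub_sym.
    replace q with (vadd (vsub q p) p) at 1 by (destruct p, q; unfold vadd, vsub; simpl; f_equal; ring).
    apply vnorm_triangle. }
  apply Rabs_le. lra.
Qed.

Lemma Jrot_norm p : vnorm (Jrot p) = vnorm p.
Proof. unfold vnorm, vnorm2, Jrot; simpl. f_equal. ring. Qed.

Lemma vnorm2_add_div_le p q a b : 0 < a -> 0 < b ->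
  vnorm2 (vadd p q) / (a + b) <= vnorm2 p / a + vnorm2 q / b.
Proof.
  intros Ha Hb. destruct p as [x1 x2], q as [y1 y2]. unfold vnorm2, vadd; simpl.
  apply (Rmult_le_reg_r (a * b * (a + b))); [apply Rmult_lt_0_compat; nra|].
  replace (((x1 + y1) * (x1 + y1) + (x2 + y2) * (x2 + y2)) / (a + b) * (a * b * (a + b)))
    with (((x1 + y1) * (x1 + y1) + (x2 + y2) * (x2 + y2)) * (a * b)) by (field; lra).
  replace (((x1 * x1 + x2 * x2) / a + (y1 * y1 + y2 * y2) / b) * (a * b * (a + b)))
    with (((x1 * x1 + x2 * x2) * b + (y1 * y1 + y2 * y2) * a) * (a + b)) by (field; lra).
  pose proof (Rle_0_sqr (b * x1 - a * y1)). pose proof (Rle_0_sqr (b * x2 - a * y2)).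
  unfold Rsqr in *. nra.
Qed.

Lemma vdist_sym p q : vdist p q = vdist q p.
Proof. apply vnorm_vsub_sym. Qed.

Lemma vdist_nonneg p q : 0 <= vdist p q.
Proof. apply vnorm_nonneg. Qed.

Lemma vdist_self p : vdist p p = 0.
Proof. unfold vdist, vnorm, vnorm2, vsub. simpl. replace (_ + _) with 0 by ring. apply sqrt_0. Qed.

Lemma vdist_eq0 p q : vdist p q = 0 -> p = q.
Proof.
  unfold vdist, vnorm. intros H. apply sqrt_eq_0 in H; [|apply vnorm2_nonneg].
  destruct p as [a b], q as [c d]; unfold vnorm2, vsub in H; simpl in H.
  pose proof (Rle_0_sqr (a - c)); pose proof (Rle_0_sqr (b - d)); unfold Rsqr in *.
  assert (E1 : (a - c) * (a - c) = 0) by lra. assert (E2 : (b - d) * (b - d) = 0) by lra.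
  apply Rmult_integral in E1, E2. f_equal; lra.
Qed.

Lemma vdist_pos p q : p <> q -> 0 < vdist p q.
Proof. intros H. destruct (vdist_nonneg p q) as [|E]; auto. exfalso; apply H, vdist_eq0; auto. Qed.

Lemma periodic_nat {A : Type} (z : R -> A) : (forall t, z (t + 2 * PI) = z t) ->
  forall n t, z (t + 2 * PI * INR n) = z t.
Proof.
  intros Hp n; induction n as [|n IH]; intros t.
  - simpl. f_equal; ring.
  - rewrite S_INR. replace (t + 2 * PI * (INR n + 1)) with ((t + 2 * PI * INR n) + 2 * PI) by ring.
    rewrite Hp. apply IH.
Qed.

Lemma periodic_Z {A : Type} (z : R -> A) : (forall t, z (t + 2 * PI) = z t) ->
  forall (k : Z) t, z (t + 2 * PI * IZR k) = z t.
Proof.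
  intros Hp k t.
  assert (E : forall p, IZR (Z.pos p) = INR (Pos.to_nat p)).
  { intros p. rewrite INR_IZR_INZ, positive_nat_Z. reflexivity. }
  destruct k as [|p|p].
  - simpl. f_equal; ring.
  - rewrite (E p). apply periodic_nat; auto.
  - rewrite <- (periodic_nat z Hp (Pos.to_nat p) (t + 2 * PI * IZR (Z.neg p))).
    f_equal. rewrite <- (E p), <- Pos2Z.opp_pos, opp_IZR. ring.
Qed.

Lemma periodic_reduce {A : Type} (z : R -> A) : (forall t, z (t + 2 * PI) = z t) ->
  forall t, exists t', - PI <= t' < PI /\ z t = z t'.
Proof.
  intros Hp t. destruct (exists_shift_into_T t) as [k Hk].
  exists (t + 2 * PI * IZR k). split; auto. rewrite periodic_Z; auto.
Qed.

(** * Real analysis *)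

Lemma open_interval_nbhd a b s : a < s < b -> exists d, 0 < d /\ forall t, Rabs (t - s) < d -> a < t < b.
Proof.
  intros Hs. exists (Rmin (b - s) (s - a)). split; [apply Rmin_pos; lra|].
  intros t Ht. pose proof (Rmin_l (b - s) (s - a)); pose proof (Rmin_r (b - s) (s - a)).
  apply Rabs_def2 in Ht. lra.
Qed.

Lemma Rlt_Rmin4 x p q r t : x < Rmin (Rmin p q) (Rmin r t) -> x < p /\ x < q /\ x < r /\ x < t.
Proof.
  intros H. pose proof (Rmin_l (Rmin p q) (Rmin r t)); pose proof (Rmin_r (Rmin p q) (Rmin r t)).
  pose proof (Rmin_l p q); pose proof (Rmin_r p q); pose proof (Rmin_l r t); pose proof (Rmin_r r t). lra.
Qed.

Lemma derivable_pt_lim_locally_ext f g x l :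
  (exists d, 0 < d /\ forall t, Rabs (t - x) < d -> f t = g t) ->
  derivable_pt_lim f x l -> derivable_pt_lim g x l.
Proof.
  intros [d [Hd E]] H eps Heps. destruct (H eps Heps) as [d1 Hd1].
  assert (Hp : 0 < Rmin d1 d) by (apply Rmin_pos; auto; apply cond_pos).
  exists (mkposreal _ Hp). intros h Hh Hhd. simpl in Hhd.
  pose proof (Rmin_l d1 d); pose proof (Rmin_r d1 d).
  rewrite <- !E; [apply Hd1; lra| |].
  - replace (x - x) with 0 by ring. rewrite Rabs_R0; auto.
  - replace (x + h - x) with h by ring. lra.
Qed.

Lemma derivable_pt_lim_shift f x l a : derivable_pt_lim f (x + a) l ->
  derivable_pt_lim (fun s => f (s + a)) x l.
Proof.
  intros H eps Heps. destruct (H eps Heps) as [d Hd]. exists d.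
  intros h Hh1 Hh2. replace (x + h + a) with (x + a + h) by ring. apply Hd; auto.
Qed.

Lemma derivable_pt_lim_plus' f g x l1 l2 : derivable_pt_lim f x l1 -> derivable_pt_lim g x l2 ->
  derivable_pt_lim (fun s => f s + g s) x (l1 + l2).
Proof. apply derivable_pt_lim_plus. Qed.

Lemma derivable_pt_lim_mult' f g x l1 l2 : derivable_pt_lim f x l1 -> derivable_pt_lim g x l2 ->
  derivable_pt_lim (fun s => f s * g s) x (l1 * g x + f x * l2).
Proof. apply derivable_pt_lim_mult. Qed.

Lemma derivable_pt_lim_div' f g x l1 l2 : derivable_pt_lim f x l1 -> derivable_pt_lim g x l2 ->
  g x <> 0 -> derivable_pt_lim (fun s => f s / g s) x ((l1 * g x - l2 * f x) / (g x * g x)).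
Proof. apply derivable_pt_lim_div. Qed.

Lemma derivable_pt_lim_comp' f g x l1 l2 : derivable_pt_lim g x l1 -> derivable_pt_lim f (g x) l2 ->
  derivable_pt_lim (fun s => f (g s)) x (l2 * l1).
Proof. apply derivable_pt_lim_comp. Qed.

Lemma derivable_pt_lim_opp' f x l : derivable_pt_lim f x l -> derivable_pt_lim (fun s => - f s) x (- l).
Proof. apply derivable_pt_lim_opp. Qed.

Lemma derivable_pt_lim_sqrt' g x l : derivable_pt_lim g x l -> 0 < g x ->
  derivable_pt_lim (fun s => sqrt (g s)) x (/ (2 * sqrt (g x)) * l).
Proof. intros. apply derivable_pt_lim_comp'; auto. apply derivable_pt_lim_sqrt; auto. Qed.

Lemma derivable_pt_lim_eq_value f x l l' : l = l' -> derivable_pt_lim f x l -> derivable_pt_lim f x l'.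
Proof. intros; subst; auto. Qed.

Lemma derivable_pt_lim_first_order g x l eps : derivable_pt_lim g x l -> 0 < eps ->
  exists d, 0 < d /\ forall h, Rabs h < d -> Rabs (g (x + h) - g x - l * h) <= eps * Rabs h.
Proof.
  intros H Heps. destruct (H eps Heps) as [d Hd]. exists d. split; [apply cond_pos|].
  intros h Hh. destruct (Req_dec h 0) as [->|Nh].
  - rewrite Rplus_0_r. unfold Rminus. rewrite Rplus_opp_r, Rmult_0_r, Rplus_0_l, Ropp_0, Rabs_R0.
    lra.
  - specialize (Hd h Nh Hh).
    replace (g (x + h) - g x - l * h) with (((g (x + h) - g x) / h - l) * h) by (field; auto).
    rewrite Rabs_mult. apply Rmult_le_compat_r; [apply Rabs_pos|lra].
Qed.

Lemma Dc_first_order z z1 x eps : Dc z z1 -> 0 < eps ->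
  exists d, 0 < d /\ forall h, Rabs h < d ->
    vnorm (vsub (vsub (z (x + h)) (z x)) (vscale h (z1 x))) <= eps * Rabs h.
Proof.
  intros [Dx Dy] Heps.
  destruct (derivable_pt_lim_first_order _ x _ (eps / 2) (Dx x)) as [d1 [Hd1 H1]]; [lra|].
  destruct (derivable_pt_lim_first_order _ x _ (eps / 2) (Dy x)) as [d2 [Hd2 H2]]; [lra|].
  exists (Rmin d1 d2). split; [apply Rmin_pos; auto|]. intros h Hh.
  pose proof (Rmin_l d1 d2); pose proof (Rmin_r d1 d2).
  replace (eps * Rabs h) with (2 * (eps / 2 * Rabs h)) by field.
  apply vnorm_le_of_comp; [pose proof (Rabs_pos h); nra| |]; simpl; rewrite Rmult_comm.
  - apply H1. lra.
  - apply H2. lra.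
Qed.

Lemma Dc_periodic z z1 : periodic z -> Dc z z1 -> periodic z1.
Proof.
  intros Hp [Hx Hy] t.
  assert (Shift : forall g : R -> R, (forall s, g (s + 2 * PI) = g s) ->
            forall l l', derivable_pt_lim g (t + 2 * PI) l -> derivable_pt_lim g t l' -> l = l').
  { intros g Hg l l' H1 H2. apply derivable_pt_lim_shift in H1.
    eapply uniqueness_limite; [|exact H2].
    eapply derivable_pt_lim_locally_ext; [|exact H1].
    exists 1. split; [lra|]. intros s _. apply Hg. }
  destruct (z1 (t + 2 * PI)) as [a b] eqn:E1, (z1 t) as [c d] eqn:E2.
  f_equal.
  - apply (Shift (fun s => fst (z s))); [intros s; rewrite Hp; auto| |].
    + specialize (Hx (t + 2 * PI)). rewrite E1 in Hx. exact Hx.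
    + specialize (Hx t). rewrite E2 in Hx. exact Hx.
  - apply (Shift (fun s => snd (z s))); [intros s; rewrite Hp; auto| |].
    + specialize (Hy (t + 2 * PI)). rewrite E1 in Hy. exact Hy.
    + specialize (Hy t). rewrite E2 in Hy. exact Hy.
Qed.

Lemma mvt_lipschitz (g g' : R -> R) c s s' : (forall t, derivable_pt_lim g t (g' t)) ->
  (forall t, Rabs (g' t) <= c) -> Rabs (g s - g s') <= c * Rabs (s - s').
Proof.
  intros Hd Hb.
  assert (Gen : forall a b, a < b -> Rabs (g b - g a) <= c * Rabs (b - a)).
  { intros a b Hab. destruct (MVT_cor2 g g' a b Hab (fun t _ => Hd t)) as [e [He _]].
    rewrite He, Rabs_mult. apply Rmult_le_compat_r; [apply Rabs_pos|auto]. }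
  destruct (Rtotal_order s s') as [Hl|[->|Hg]].
  - rewrite <- Rabs_Ropp, (Rabs_minus_sym s). replace (- (g s - g s')) with (g s' - g s) by ring.
    auto.
  - unfold Rminus. rewrite !Rplus_opp_r, Rabs_R0. lra.
  - auto.
Qed.

Lemma periodic_deriv_zero (g g' : R -> R) :
  (forall t, g (t + 2 * PI) = g t) -> (forall t, derivable_pt_lim g t (g' t)) ->
  exists c, - PI < c < PI /\ g' c = 0.
Proof.
  intros Hp Hd. pose proof PI_RGT_0.
  destruct (MVT_cor2 g g' (- PI) PI) as [c [Hc1 Hc2]]; [lra|intros; apply Hd|].
  exists c. split; auto.
  replace PI with (- PI + 2 * PI) in Hc1 at 1 by ring. rewrite Hp in Hc1.
  assert (E : g' c * (PI - - PI) = 0) by lra.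
  apply Rmult_integral in E. destruct E; [auto|lra].
Qed.

Lemma periodic_deriv_bound (g g' : R -> R) B :
  (forall t, g (t + 2 * PI) = g t) -> (forall t, g' (t + 2 * PI) = g' t) ->
  (forall t, derivable_pt_lim g t (g' t)) ->
  (forall s t, - PI <= s <= PI -> - PI <= t <= PI -> Rabs (g' s - g' t) <= B) ->
  forall t, Rabs (g' t) <= B.
Proof.
  intros Pg Pg' Dg Osc t.
  destruct (periodic_deriv_zero g g' Pg Dg) as [c [Hc Ec]].
  destruct (periodic_reduce g' Pg' t) as [t' [Ht' ->]].
  replace (g' t') with (g' t' - g' c) by lra. apply Osc; lra.
Qed.

Lemma pos_deriv_strict_locally f x l : derivable_pt_lim f x l -> 0 < l ->
  exists d, 0 < d /\ forall h, 0 < h < d -> f x < f (x + h) /\ f (x - h) < f x.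
Proof.
  intros H Hl. destruct (H l Hl) as [d Hd]. exists d. split; [apply cond_pos|].
  intros h Hh. split.
  - specialize (Hd h ltac:(lra) ltac:(rewrite Rabs_right; lra)).
    apply Rabs_def2 in Hd. destruct Hd as [_ Hd].
    assert (P : 0 < (f (x + h) - f x) / h) by lra.
    apply (Rmult_lt_compat_r h) in P; [|lra]. unfold Rdiv in P.
    rewrite Rmult_assoc, Rinv_l, Rmult_0_l in P by lra. lra.
  - specialize (Hd (- h) ltac:(lra) ltac:(rewrite Rabs_left; lra)).
    apply Rabs_def2 in Hd. destruct Hd as [_ Hd].
    assert (P : 0 < (f (x + - h) - f x) / - h) by lra.
    apply (Rmult_lt_compat_r h) in P; [|lra].
    replace ((f (x + - h) - f x) / - h * h) with (f x - f (x + - h)) in P by (field; lra).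
    replace (x - h) with (x + - h) by ring. lra.
Qed.

Lemma exists_pos_lt_both d w : 0 < d -> 0 < w -> exists h, 0 < h /\ h < d /\ h < w.
Proof.
  intros. exists (Rmin d w / 2). pose proof (Rmin_l d w); pose proof (Rmin_r d w).
  pose proof (Rmin_pos d w). lra.
Qed.

Section DerivSign.
Variables (phi phi' : R -> R) (a b : R).
Hypothesis deriv_nonzero : forall s, a < s < b -> derivable_pt_lim phi s (phi' s) /\ phi' s <> 0.

(* An interior maximum of phi on [s1, s2] would be a zero of phi', and neither endpoint can be one. *)
Lemma deriv_pos_propagates_right s1 s2 : a < s1 -> s1 < s2 -> s2 < b -> 0 < phi' s1 -> 0 < phi' s2.
Proof.
  intros H1 H12 H2 P1.
  destruct (Rlt_dec 0 (phi' s2)) as [|N]; auto. exfalso.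
  assert (N2 : phi' s2 < 0) by (destruct (deriv_nonzero s2 ltac:(lra)); lra).
  destruct (continuity_ab_maj phi s1 s2) as [m [Hm Hmr]]; [lra| |].
  { intros c Hc. apply derivable_continuous_pt. exists (phi' c). apply deriv_nonzero. lra. }
  destruct (pos_deriv_strict_locally phi s1 (phi' s1)) as [d1 [Hd1 P]]; [apply deriv_nonzero; lra|auto|].
  pose proof (derivable_pt_lim_opp' phi s2 (phi' s2) ltac:(apply deriv_nonzero; lra)) as Hop.
  destruct (pos_deriv_strict_locally _ s2 _ Hop) as [d2 [Hd2 Q]]; [lra|].
  destruct (Req_dec m s1) as [->|Ne1].
  { destruct (exists_pos_lt_both d1 (s2 - s1)) as [h [? [? ?]]]; [lra|lra|].
    destruct (P h ltac:(lra)). specialize (Hm (s1 + h) ltac:(lra)). lra. }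
  destruct (Req_dec m s2) as [->|Ne2].
  { destruct (exists_pos_lt_both d2 (s2 - s1)) as [h [? [? ?]]]; [lra|lra|].
    destruct (Q h ltac:(lra)). specialize (Hm (s2 - h) ltac:(lra)). lra. }
  destruct (deriv_nonzero m ltac:(lra)) as [Dm Nm].
  destruct (Rlt_dec 0 (phi' m)) as [Pm|Pm].
  - destruct (pos_deriv_strict_locally phi m _ Dm Pm) as [d3 [Hd3 R3]].
    destruct (exists_pos_lt_both d3 (s2 - m)) as [h [? [? ?]]]; [lra|lra|].
    destruct (R3 h ltac:(lra)). specialize (Hm (m + h) ltac:(lra)). lra.
  - pose proof (derivable_pt_lim_opp' phi m _ Dm) as Hop'.
    destruct (pos_deriv_strict_locally _ m _ Hop') as [d3 [Hd3 R3]]; [lra|].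
    destruct (exists_pos_lt_both d3 (m - s1)) as [h [? [? ?]]]; [lra|lra|].
    destruct (R3 h ltac:(lra)). specialize (Hm (m - h) ltac:(lra)). lra.
Qed.

End DerivSign.

Lemma deriv_sign_constant (phi phi' : R -> R) a b :
  (forall s, a < s < b -> derivable_pt_lim phi s (phi' s) /\ phi' s <> 0) ->
  forall s1 s2, a < s1 < b -> a < s2 < b -> 0 < phi' s1 -> 0 < phi' s2.
Proof.
  intros H s1 s2 H1 H2 P.
  destruct (Rtotal_order s1 s2) as [Hl|[<-|Hg]]; auto.
  - eapply deriv_pos_propagates_right; eauto; lra.
  - destruct (Rlt_dec 0 (phi' s2)) as [|N]; auto. exfalso.
    assert (H' : forall s, a < s < b ->
      derivable_pt_lim (fun s => - phi s) s (- phi' s) /\ - phi' s <> 0).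
    { intros s Hs. destruct (H s Hs). split; [apply derivable_pt_lim_opp'; auto|lra]. }
    assert (N2 : 0 < - phi' s2) by (destruct (H s2 H2); lra).
    pose proof (deriv_pos_propagates_right (fun s => - phi s) (fun s => - phi' s) a b H'
                  s2 s1 ltac:(lra) Hg ltac:(lra) N2). lra.
Qed.

Lemma continuity_pt_plus' f g x : continuity_pt f x -> continuity_pt g x ->
  continuity_pt (fun s => f s + g s) x.
Proof. apply continuity_pt_plus. Qed.
Lemma continuity_pt_minus' f g x : continuity_pt f x -> continuity_pt g x ->
  continuity_pt (fun s => f s - g s) x.
Proof. apply continuity_pt_minus. Qed.
Lemma continuity_pt_mult' f g x : continuity_pt f x -> continuity_pt g x ->
  continuity_pt (fun s => f s * g s) x.
Proof. apply continuity_pt_mult. Qed.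
Lemma continuity_pt_const' c x : continuity_pt (fun _ => c) x.
Proof. apply continuity_pt_const. intros a b; auto. Qed.
Lemma continuity_pt_id' x : continuity_pt (fun s => s) x.
Proof. apply derivable_continuous_pt, derivable_pt_id. Qed.
Lemma continuity_pt_comp' f g x : continuity_pt g x -> continuity_pt f (g x) ->
  continuity_pt (fun s => f (g s)) x.
Proof. intros. apply (continuity_pt_comp g f x); auto. Qed.
Lemma continuity_pt_abs' f x : continuity_pt f x -> continuity_pt (fun s => Rabs (f s)) x.
Proof. intros. apply continuity_pt_comp'; auto. apply Rcontinuity_abs. Qed.

(** * Sums along partitions *)

Fixpoint chain_sum (F : R -> R -> R) (a : R) (l : list R) : R :=
  match l with nil => 0 | b :: l' => F a b + chain_sum F b l' end.

Fixpoint decr_from (a : R) (l : list R) : Prop :=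
  match l with nil => True | b :: l' => b < a /\ decr_from b l' end.

Definition riesz_quot (g : curve) (x x' : R) : R := vnorm2 (vsub (g x') (g x)) / (x' - x).
Definition riesz_quot_abs (g : curve) (x x' : R) : R := vnorm2 (vsub (g x') (g x)) / Rabs (x' - x).

Lemma last_cons (x : R) l d : last (x :: l) d = last l x.
Proof.
  revert x d; induction l as [|y l IH]; intros x d; [reflexivity|].
  change (last (y :: l) d = last (y :: l) x). rewrite !IH. reflexivity.
Qed.

Lemma last_default (l : list R) d1 d2 : l <> nil -> last l d1 = last l d2.
Proof. destruct l as [|x l]; [congruence|]. rewrite !last_cons. auto. Qed.

Lemma last_map (th : R -> R) a l : last (map th l) (th a) = th (last l a).
Proof.
  revert a; induction l as [|b l IH]; intros a; simpl; auto.
  change (last (th b :: map th l) (th a) = th (last (b :: l) a)). rewrite !last_cons. apply IH.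
Qed.

Lemma incr_from_app a l b : incr_from a l -> last l a < b -> incr_from a (l ++ b :: nil).
Proof.
  revert a; induction l as [|x l IH]; intros a H Hl; [simpl in *; tauto|].
  rewrite last_cons in Hl. destruct H. split; auto.
Qed.

Lemma incr_from_last a l : incr_from a l -> a <= last l a.
Proof.
  revert a; induction l as [|x l IH]; intros a H; [simpl; lra|].
  rewrite last_cons. destruct H as [H1 H2]. specialize (IH x H2). lra.
Qed.

Lemma incr_from_shift T a l : incr_from a l -> incr_from (a + T) (map (fun x => x + T) l).
Proof.
  revert a; induction l as [|b l IH]; intros a H; simpl in *; auto. destruct H.
  split; [lra|auto].
Qed.

Lemma map_incr (th : R -> R) lo hi a l :
  (forall x x', lo <= x -> x < x' -> x' <= hi -> th x < th x') ->
  lo <= a -> incr_from a l -> last l a <= hi -> incr_from (th a) (map th l).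
Proof.
  intros H; revert a; induction l as [|b l IH]; intros a Ha Hl Hlast; simpl; auto.
  destruct Hl as [Hab Hl]. rewrite last_cons in Hlast.
  pose proof (incr_from_last b l Hl). split; [apply H|apply IH]; auto; lra.
Qed.

Lemma map_decr (th : R -> R) lo hi a l :
  (forall x x', lo <= x -> x < x' -> x' <= hi -> th x' < th x) ->
  lo <= a -> incr_from a l -> last l a <= hi -> decr_from (th a) (map th l).
Proof.
  intros H; revert a; induction l as [|b l IH]; intros a Ha Hl Hlast; simpl; auto.
  destruct Hl as [Hab Hl]. rewrite last_cons in Hlast.
  pose proof (incr_from_last b l Hl). split; [apply H|apply IH]; auto; lra.
Qed.

Lemma rsum_chain_sum g a l : rsum g a l = chain_sum (riesz_quot g) a l.
Proof. revert a; induction l as [|b l IH]; intros a; simpl; auto. rewrite IH. reflexivity. Qed.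

Lemma chain_sum_app1 F a l b : chain_sum F a (l ++ b :: nil) = chain_sum F a l + F (last l a) b.
Proof.
  revert a; induction l as [|x l IH]; intros a; [simpl; ring|].
  rewrite last_cons. change ((x :: l) ++ b :: nil) with (x :: (l ++ b :: nil)).
  simpl chain_sum. rewrite IH. ring.
Qed.

Lemma chain_sum_ext F F' a l : (forall x x', F x x' = F' x x') -> chain_sum F a l = chain_sum F' a l.
Proof.
  intros E; revert a; induction l as [|b l IH]; intros a; simpl; auto. rewrite E, IH; auto.
Qed.

Lemma chain_sum_ext_incr F F' a l : incr_from a l -> (forall x x', x < x' -> F x x' = F' x x') ->
  chain_sum F a l = chain_sum F' a l.
Proof.
  intros H E; revert a H; induction l as [|b l IH]; intros a H; simpl; auto.
  destruct H. rewrite E, IH; auto.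
Qed.

Lemma chain_sum_le F F' lo hi a l :
  (forall x x', lo <= x -> x < x' -> x' <= hi -> F x x' <= F' x x') ->
  lo <= a -> incr_from a l -> last l a <= hi -> chain_sum F a l <= chain_sum F' a l.
Proof.
  intros H; revert a; induction l as [|b l IH]; intros a Ha Hl Hlast; simpl; [lra|].
  destruct Hl as [Hab Hl]. rewrite last_cons in Hlast.
  pose proof (incr_from_last b l Hl).
  apply Rplus_le_compat; [apply H|apply IH]; auto; lra.
Qed.

Lemma chain_sum_lin F F' al be a l :
  chain_sum (fun x x' => al * F x x' + be * F' x x') a l = al * chain_sum F a l + be * chain_sum F' a l.
Proof. revert a; induction l as [|b l IH]; intros a; simpl; [ring|]. rewrite IH. ring. Qed.

Lemma chain_sum_telescope (h : R -> R) a l : chain_sum (fun x x' => h x' - h x) a l = h (last l a) - h a.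
Proof.
  revert a; induction l as [|b l IH]; intros a; [simpl; ring|]. cbn [chain_sum].
  rewrite IH, last_cons. ring.
Qed.

Lemma chain_sum_map F (th : R -> R) a l :
  chain_sum F (th a) (map th l) = chain_sum (fun x x' => F (th x) (th x')) a l.
Proof. revert a; induction l as [|b l IH]; intros a; simpl; auto. rewrite IH; auto. Qed.

Lemma riesz_quot_nonneg g a b : a < b -> 0 <= riesz_quot g a b.
Proof. intros. apply Rdiv_le_0_compat; [apply vnorm2_nonneg|lra]. Qed.

Lemma rsum_nonneg g a l : incr_from a l -> 0 <= rsum g a l.
Proof.
  revert a; induction l as [|x l IH]; intros a H; simpl; [lra|].
  destruct H as [H1 H2]. pose proof (IH x H2). pose proof (riesz_quot_nonneg g a x H1).
  unfold riesz_quot in *. lra.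
Qed.

Lemma riesz_quot_refine g a m b : a < m -> m < b -> riesz_quot g a b <= riesz_quot g a m + riesz_quot g m b.
Proof.
  intros H1 H2. unfold riesz_quot.
  replace (vsub (g b) (g a)) with (vadd (vsub (g m) (g a)) (vsub (g b) (g m)))
    by (destruct (g a), (g m), (g b); unfold vadd, vsub; simpl; f_equal; ring).
  replace (b - a) with ((m - a) + (b - m)) by ring.
  apply vnorm2_add_div_le; lra.
Qed.

Lemma riesz_quot_abs_sym g x x' : riesz_quot_abs g x x' = riesz_quot_abs g x' x.
Proof. unfold riesz_quot_abs. rewrite vnorm2_vsub_sym, Rabs_minus_sym. auto. Qed.

Lemma decr_from_rev g a l : decr_from a l -> exists a' l', incr_from a' l' /\ a' = last l a /\
  last l' a' = a /\ chain_sum (riesz_quot_abs g) a l = chain_sum (riesz_quot_abs g) a' l'.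
Proof.
  revert a; induction l as [|b m IH]; intros a H.
  - exists a, nil. simpl. repeat split; auto.
  - destruct H as [Hb Hm]. destruct (IH b Hm) as [a'' [l'' [H1 [H2 [H3 H4]]]]].
    exists a'', (l'' ++ a :: nil). split; [|split; [|split]].
    + apply incr_from_app; auto. rewrite H3. auto.
    + rewrite last_cons. auto.
    + apply last_last.
    + cbn [chain_sum]. rewrite chain_sum_app1, H3, H4, riesz_quot_abs_sym. ring.
Qed.

(** * Points near the interior of a curve *)

Definition segment_point (p q : pt) (lam : R) : pt := vadd p (vscale lam (vsub q p)).

Definition ramp (s : R) : R := (s + Rabs s) / 2.

Lemma ramp_affine_continuous a b s : continuity_pt (fun s => ramp (a * s + b)) s.
Proof.
  unfold ramp. apply continuity_pt_mult'; [|apply continuity_pt_const'].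
  assert (C : continuity_pt (fun s => a * s + b) s).
  { apply continuity_pt_plus'; [apply continuity_pt_mult'|];
      auto using continuity_pt_const', continuity_pt_id'. }
  apply continuity_pt_plus'; [|apply continuity_pt_abs']; auto.
Qed.

Lemma ramp_of_nonpos s : s <= 0 -> ramp s = 0.
Proof. intros. unfold ramp. rewrite Rabs_left1 by auto. field. Qed.

Lemma ramp_of_nonneg s : 0 <= s -> ramp s = s.
Proof. intros. unfold ramp. rewrite Rabs_right by lra. field. Qed.

(* First run along the segment from q back to p, then along the given path from p. *)
Lemma joinable_segment z p q x :
  (forall lam, 0 <= lam <= 1 -> ~ on_curve z (segment_point p q lam)) ->
  joinable_avoiding z p x -> joinable_avoiding z q x.
Proof.
  intros Hseg (g & Cx & Cy & G0 & G1 & Gav).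
  exists (fun s => vadd (g (ramp (2 * s + -1))) (vscale (ramp (-2 * s + 1)) (vsub q p))).
  assert (Comp : forall (pr : pt -> R) s, continuity (fun s => pr (g s)) ->
     continuity_pt (fun s => pr (g (ramp (2 * s + -1))) + ramp (-2 * s + 1) * pr (vsub q p)) s).
  { intros pr s Cg. apply continuity_pt_plus'.
    - apply (continuity_pt_comp' (fun u => pr (g u))); [apply ramp_affine_continuous|apply Cg].
    - apply continuity_pt_mult'; [apply ramp_affine_continuous|apply continuity_pt_const']. }
  split; [|split; [|split; [|split]]].
  - intros s. apply (Comp fst s Cx).
  - intros s. apply (Comp snd s Cy).
  - rewrite ramp_of_nonpos, ramp_of_nonneg, G0 by lra.
    destruct p, q; unfold vadd, vscale, vsub; simpl; f_equal; ring.
  - rewrite ramp_of_nonneg, ramp_of_nonpos by lra. replace (2 * 1 + -1) with 1 by ring. rewrite G1.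
    destruct x; unfold vadd, vscale; simpl; f_equal; ring.
  - intros s Hs. destruct (Rle_dec s (/ 2)).
    + rewrite ramp_of_nonpos, ramp_of_nonneg, G0 by lra.
      replace (vadd p (vscale (-2 * s + 1) (vsub q p))) with (segment_point p q (-2 * s + 1)) by reflexivity.
      apply Hseg. lra.
    + rewrite ramp_of_nonneg, ramp_of_nonpos by lra.
      replace (vadd (g (2 * s + -1)) (vscale 0 (vsub q p))) with (g (2 * s + -1))
        by (destruct (g (2 * s + -1)); unfold vadd, vscale; simpl; f_equal; ring).
      apply Gav. lra.
Qed.

Lemma segpt_dist p q lam : 0 <= lam <= 1 -> vdist (segment_point p q lam) p <= vdist q p.
Proof.
  intros H. unfold vdist, segment_point.
  replace (vsub (vadd p (vscale lam (vsub q p))) p) with (vscale lam (vsub q p))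
    by (destruct p, q; unfold vsub, vadd, vscale; simpl; f_equal; ring).
  rewrite vnorm_scale, Rabs_right by lra. pose proof (vnorm_nonneg (vsub q p)). nra.
Qed.

Lemma segpt_sym p q lam : segment_point q p lam = segment_point p q (1 - lam).
Proof. destruct p, q; unfold segment_point, vsub, vadd, vscale; simpl; f_equal; ring. Qed.

Lemma curve_interior_segment z p q :
  (forall lam, 0 <= lam <= 1 -> ~ on_curve z (segment_point p q lam)) ->
  curve_interior z p -> curve_interior z q.
Proof.
  intros Hseg [Hp [M HM]]. split.
  - replace q with (segment_point p q 1) by (destruct p, q; unfold segment_point, vsub, vadd, vscale; simpl; f_equal; ring).
    apply Hseg; lra.
  - exists M. intros x Hx. apply HM. apply (joinable_segment z q p); auto.
    intros lam Hl. rewrite segpt_sym. apply Hseg. lra.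
Qed.

(* A disc around p missing the curve lies entirely inside or entirely outside it. *)
Lemma boundary_near_curve z p : boundary (curve_interior z) p ->
  forall r, 0 < r -> exists q, vdist q p < r /\ on_curve z q.
Proof.
  intros Hb r Hr. apply Classical_Pred_Type.not_all_not_ex. intros Hn.
  assert (Av : forall q lam, vdist p q < r -> 0 <= lam <= 1 -> ~ on_curve z (segment_point p q lam)).
  { intros q lam Hq Hl Hon. apply (Hn (segment_point p q lam)). split; auto.
    pose proof (segpt_dist p q lam Hl). rewrite vdist_sym in Hq. lra. }
  destruct (Hb r Hr) as [[q1 [Hq1 Dq1]] [q2 [Hq2 Dq2]]].
  apply Hq2, (curve_interior_segment z p q2); [intros; apply Av; auto|].
  apply (curve_interior_segment z q1 p); auto.
  intros lam Hl. rewrite segpt_sym. apply Av; auto. lra.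
Qed.

Lemma dotp_quotient_bound u w A B dt h e K :
  vnorm2 u <> 0 -> h <> 0 -> vadd (vscale dt u) A = vadd (vscale h w) B ->
  vnorm A <= e * Rabs dt -> vnorm B <= e * Rabs h -> Rabs dt <= K * Rabs h ->
  Rabs (dt / h - dotp u w / vnorm2 u) <= vnorm u * (e * (1 + K)) / vnorm2 u.
Proof.
  intros HU Hh E HA HB Hdt.
  assert (Ed : dt * vnorm2 u + dotp u A = h * dotp u w + dotp u B).
  { destruct u as [u1 u2], w as [w1 w2], A as [A1 A2], B as [B1 B2].
    unfold vadd, vscale in E; simpl in E. injection E as E1 E2.
    unfold dotp, vnorm2; simpl. nra. }
  assert (Hpos : 0 < vnorm2 u) by (pose proof (vnorm2_nonneg u); lra).
  replace (dt / h - dotp u w / vnorm2 u) with ((dotp u B - dotp u A) / h / vnorm2 u)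
    by (field_simplify; [|auto|auto]; apply (Rmult_eq_reg_r (vnorm2 u * h)); [|nra]; field_simplify; nra).
  unfold Rdiv. rewrite Rabs_mult, (Rabs_right (/ vnorm2 u)) by (left; apply Rinv_0_lt_compat; auto).
  apply Rmult_le_compat_r; [left; apply Rinv_0_lt_compat; auto|].
  rewrite Rabs_mult, Rabs_inv. apply (Rmult_le_reg_r (Rabs h)); [apply Rabs_pos_lt; auto|].
  rewrite Rmult_assoc, Rinv_l, Rmult_1_r by (apply Rabs_no_R0; auto).
  pose proof (dotp_bound u A); pose proof (dotp_bound u B); pose proof (vnorm_nonneg u).
  assert (He : 0 <= e).
  { pose proof (vnorm_nonneg B). pose proof (Rabs_pos_lt h Hh).
    destruct (Rle_dec 0 e); [auto|nra]. }
  assert (vnorm u * vnorm A <= vnorm u * (e * (K * Rabs h))).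
  { apply Rmult_le_compat_l; auto. pose proof (Rmult_le_compat_l e _ _ He Hdt). lra. }
  assert (vnorm u * vnorm B <= vnorm u * (e * Rabs h)) by (apply Rmult_le_compat_l; auto).
  eapply Rle_trans; [apply Rabs_triang|]. rewrite Rabs_Ropp. nra.
Qed.

Lemma derivable_pt_lim_normalize (p q : R -> R) x p' q' :
  derivable_pt_lim p x p' -> derivable_pt_lim q x q' -> 0 < p x * p x + q x * q x ->
  derivable_pt_lim (fun t => p t / sqrt (p t * p t + q t * q t)) x
    ((p' * (p x * p x + q x * q x) - p x * (p x * p' + q x * q')) /
       ((p x * p x + q x * q x) * sqrt (p x * p x + q x * q x))).
Proof.
  intros Dp Dq HQ.
  pose proof (sqrt_lt_R0 _ HQ) as Hn. pose proof (sqrt_sqrt _ (Rlt_le _ _ HQ)) as Hnn.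
  assert (DQ : derivable_pt_lim (fun t => sqrt (p t * p t + q t * q t)) x
     (/ (2 * sqrt (p x * p x + q x * q x)) * ((p' * p x + p x * p') + (q' * q x + q x * q')))).
  { apply (derivable_pt_lim_sqrt' (fun t => p t * p t + q t * q t)); [|auto].
    apply (derivable_pt_lim_plus' (fun t => p t * p t) (fun t => q t * q t));
      apply derivable_pt_lim_mult'; auto. }
  eapply derivable_pt_lim_eq_value; [|exact (derivable_pt_lim_div' p _ x _ _ Dp DQ ltac:(lra))].
  set (n := sqrt (p x * p x + q x * q x)) in *. clearbody n. rewrite <- Hnn. field. lra.
Qed.

Definition preimage (z : curve) (p : pt) : R := epsilon (inhabits 0) (fun t => z t = p).

Lemma preimage_spec z p : on_curve z p -> z (preimage z p) = p.
Proof. intros H. exact (epsilon_spec (inhabits 0) (fun t => z t = p) H). Qed.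

Definition preimage_near (z : curve) (p : pt) (r : R) : R :=
  preimage z p + 2 * PI * IZR (up ((r - preimage z p) / (2 * PI) + / 2) - 1).

Lemma preimage_near_spec z p r : periodic z -> on_curve z p ->
  z (preimage_near z p r) = p /\ Rabs (preimage_near z p r - r) <= PI.
Proof.
  intros Pz H. split.
  - unfold preimage_near. rewrite periodic_Z; auto. apply preimage_spec; auto.
  - unfold preimage_near. pose proof PI_RGT_0.
    set (x := (r - preimage z p) / (2 * PI)).
    destruct (archimed (x + / 2)) as [H1 H2]. rewrite minus_IZR.
    set (k := IZR (up (x + / 2))) in *.
    assert (E : r - preimage z p = 2 * PI * x) by (unfold x; field; lra).
    apply Rabs_le. nra.
Qed.

(* If [y = z o th] has constant speed [c], then [y'' = c^2 reparam_accel (z' o th) (z'' o th)]. *)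
Definition reparam_accel (u v : pt) : pt :=
  vsub (vscale (/ vnorm2 u) v) (vscale (dotp u v / (vnorm2 u * vnorm2 u)) u).

Lemma reparam_accel_cross u v : vnorm2 u <> 0 ->
  reparam_accel u v = vscale (cross u v / (vnorm2 u * vnorm2 u)) (Jrot u).
Proof.
  intros H. unfold reparam_accel, cross, vscale, vsub, Jrot, dotp. unfold vnorm2 in *.
  destruct u as [a b], v as [c d]; simpl in *. f_equal; field; auto.
Qed.

Lemma reparam_accel_sub u v v' :
  vsub (reparam_accel u v') (reparam_accel u v) = reparam_accel u (vsub v' v).
Proof.
  unfold reparam_accel, vsub, vscale, dotp. destruct u as [a b], v as [c d], v' as [e g]; simpl.
  generalize (vnorm2 (a, b)). intros Q. f_equal; unfold Rdiv; ring.
Qed.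

Lemma reparam_accel_bound u v : 0 < vnorm u -> vnorm (reparam_accel u v) <= vnorm v / vnorm2 u.
Proof.
  intros H. destruct (vnorm2_pos_of_vnorm u H) as [E NZ].
  rewrite reparam_accel_cross, vnorm_scale, Jrot_norm, E by auto.
  pose proof (cross_bound u v) as Cb. set (n := vnorm u) in *. pose proof (vnorm_nonneg v).
  unfold Rdiv. rewrite Rabs_mult, Rabs_inv, (Rabs_right (n * n * (n * n))) by nra.
  apply Rle_trans with (n * vnorm v * / (n * n * (n * n)) * n).
  - apply Rmult_le_compat_r; [lra|]. apply Rmult_le_compat_r; auto.
    left; apply Rinv_0_lt_compat; nra.
  - right. field. lra.
Qed.

Lemma inv_pow4_diff n n' d : 0 < n -> 0 < n' -> Rabs (n - n') <= d ->
  Rabs (/ (n' * n' * (n' * n')) - / (n * n * (n * n))) <=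
  d * (n + n') * (n * n + n' * n') / (n * n * (n * n) * (n' * n' * (n' * n'))).
Proof.
  intros Hn Hn' Hd.
  set (P := (n + n') * (n * n + n' * n')). set (D := n * n * (n * n) * (n' * n' * (n' * n'))).
  assert (HP : 0 < P) by (unfold P; apply Rmult_lt_0_compat; nra).
  assert (HD : 0 < D) by (unfold D; repeat apply Rmult_lt_0_compat; lra).
  replace (/ (n' * n' * (n' * n')) - / (n * n * (n * n))) with ((n - n') * P * / D)
    by (unfold P, D; field; lra).
  replace (d * (n + n') * (n * n + n' * n') / D) with (d * P * / D) by (unfold P; field; lra).
  rewrite !Rabs_mult, (Rabs_right P), (Rabs_right (/ D)) by (try left; try apply Rinv_0_lt_compat; lra).
  apply Rmult_le_compat_r; [left; apply Rinv_0_lt_compat; lra|]. apply Rmult_le_compat_r; lra.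
Qed.

Lemma reparam_accel_lip_coeff n n' d m : 0 < m -> m <= n -> m <= n' -> Rabs (n - n') <= d -> d <= m / 2 ->
  d / (n' * n' * n') + d * n / (n' * n' * (n' * n')) +
  d * (n + n') * (n * n + n' * n') / (n * n * (n' * n' * (n' * n'))) <= 25 * d / (m * m * m).
Proof.
  intros Hm Hn Hn' Hd Hdm. apply Rabs_le_inv in Hd.
  set (a := / n'). set (b := / n). set (mu := / m).
  assert (Ha : n' * a = 1) by (unfold a; field; lra).
  assert (Hb : n * b = 1) by (unfold b; field; lra).
  assert (Ha0 : 0 < a) by (unfold a; apply Rinv_0_lt_compat; lra).
  assert (Hb0 : 0 < b) by (unfold b; apply Rinv_0_lt_compat; lra).
  assert (Hamu : a <= mu) by (unfold a, mu; apply Rinv_le_contravar; lra).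
  assert (HX : 0 <= n * a <= 3 / 2) by (split; [|assert (n <= 3 / 2 * n') by lra]; nra).
  assert (HY : 0 <= n' * b <= 3 / 2) by (split; [|assert (n' <= 3 / 2 * n) by lra]; nra).
  replace (d / (n' * n' * n')) with (d * (a * a * a)) by (unfold a; field; lra).
  replace (d * n / (n' * n' * (n' * n'))) with (d * (n * a) * (a * a * a)) by (unfold a; field; lra).
  replace (d * (n + n') * (n * n + n' * n') / (n * n * (n' * n' * (n' * n'))))
    with (d * ((n * a + 1) * ((n * a) * (n * a) + 1) * ((n' * b) * (n' * b))) * (a * a * a))
    by (unfold a, b; field; lra).
  replace (25 * d / (m * m * m)) with (25 * d * (mu * mu * mu)) by (unfold mu; field; lra).
  set (P := (n * a + 1) * ((n * a) * (n * a) + 1) * ((n' * b) * (n' * b))).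
  assert (HP : 0 <= P <= 5 / 2 * (13 / 4) * (9 / 4)).
  { unfold P. split; [apply Rmult_le_pos; [apply Rmult_le_pos|]; nra|].
    apply Rmult_le_compat; [apply Rmult_le_pos; nra|nra|apply Rmult_le_compat; nra|nra]. }
  assert (Hc : 0 <= a * a * a <= mu * mu * mu).
  { split; [apply Rmult_le_pos; [apply Rmult_le_pos|]; lra|].
    apply Rmult_le_compat; [nra|lra|apply Rmult_le_compat; lra|lra]. }
  set (a3 := a * a * a) in *. set (m3 := mu * mu * mu) in *.
  assert (d * (n * a) * a3 <= d * (3 / 2) * m3) by (apply Rmult_le_compat; try nra).
  assert (d * P * a3 <= d * (5 / 2 * (13 / 4) * (9 / 4)) * m3) by (apply Rmult_le_compat; try nra).
  assert (d * a3 <= d * m3) by nra.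
  nra.
Qed.

Lemma reparam_accel_sub_decomp u u' v : vnorm2 u <> 0 -> vnorm2 u' <> 0 ->
  vsub (reparam_accel u' v) (reparam_accel u v) =
  vadd (vscale (cross (vsub u' u) v / (vnorm2 u' * vnorm2 u')) (Jrot u'))
       (vscale (cross u v) (vadd (vscale (/ (vnorm2 u' * vnorm2 u')) (Jrot (vsub u' u)))
                                 (vscale (/ (vnorm2 u' * vnorm2 u') - / (vnorm2 u * vnorm2 u)) (Jrot u)))).
Proof.
  intros NZ NZ'. rewrite !reparam_accel_cross by auto.
  unfold vnorm2 in *. unfold vsub, vadd, vscale, Jrot, cross.
  destruct u as [a1 a2], u' as [b1 b2], v as [c1 c2]; simpl in *. f_equal; field; auto.
Qed.

Lemma vnorm_cross_term w v u : 0 < vnorm u ->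
  vnorm (vscale (cross w v / (vnorm2 u * vnorm2 u)) (Jrot u)) <=
  vnorm v * (vnorm w / (vnorm u * vnorm u * vnorm u)).
Proof.
  intros Hu. destruct (vnorm2_pos_of_vnorm u Hu) as [E _].
  rewrite vnorm_scale, Jrot_norm, E. set (n := vnorm u) in *.
  pose proof (cross_bound w v) as Cb. pose proof (vnorm_nonneg v). pose proof (vnorm_nonneg w).
  unfold Rdiv. rewrite Rabs_mult, Rabs_inv, (Rabs_right (n * n * (n * n))) by nra.
  apply Rle_trans with (vnorm w * vnorm v * / (n * n * (n * n)) * n).
  - apply Rmult_le_compat_r; [lra|]. apply Rmult_le_compat_r; auto.
    left; apply Rinv_0_lt_compat; repeat apply Rmult_lt_0_compat; lra.
  - right. field. lra.
Qed.

Section ReparamAccelLipschitz.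
Variables (u u' v : pt) (m M : R).
Hypotheses (Hm : 0 < m) (Hn : m <= vnorm u) (Hn' : m <= vnorm u') (HM : vnorm v <= M).

Lemma reparam_accel_lipschitz_far : m / 2 < vnorm (vsub u' u) ->
  vnorm (vsub (reparam_accel u' v) (reparam_accel u v)) <= 25 * M * vnorm (vsub u' u) / (m * m * m).
Proof.
  intros Large. set (d := vnorm (vsub u' u)) in *. pose proof (vnorm_nonneg v).
  assert (Each : forall w, m <= vnorm w -> vnorm (reparam_accel w v) <= M / (m * m)).
  { intros w Hw. eapply Rle_trans; [apply reparam_accel_bound; lra|].
    destruct (vnorm2_pos_of_vnorm w ltac:(lra)) as [-> _].
    unfold Rdiv.
    apply Rmult_le_compat; auto; [left; apply Rinv_0_lt_compat; nra|apply Rinv_le_contravar; nra]. }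
  eapply Rle_trans; [apply vnorm_vsub_le|].
  pose proof (Each u' Hn'). pose proof (Each u Hn).
  replace (25 * M * d / (m * m * m)) with ((25 * d / m) * (M / (m * m))) by (field; lra).
  assert (2 <= 25 * d / m) by (apply (Rmult_le_reg_r m); auto; unfold Rdiv; rewrite Rmult_assoc, Rinv_l; lra).
  assert (0 <= M / (m * m)) by (apply Rdiv_le_0_compat; nra).
  nra.
Qed.

(* By [reparam_accel_sub_decomp] the difference is a term linear in [u' - u] plus a term controlled
   by [inv_pow4_diff]. *)
Lemma reparam_accel_lipschitz_near : vnorm (vsub u' u) <= m / 2 ->
  vnorm (vsub (reparam_accel u' v) (reparam_accel u v)) <= 25 * M * vnorm (vsub u' u) / (m * m * m).
Proof.
  intros Small. pose proof (vnorm_nonneg v) as Hv0.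
  destruct (vnorm2_pos_of_vnorm u ltac:(lra)) as [E NZ].
  destruct (vnorm2_pos_of_vnorm u' ltac:(lra)) as [E' NZ'].
  rewrite reparam_accel_sub_decomp by auto.
  eapply Rle_trans; [apply vnorm_triangle|].
  pose proof (vnorm_cross_term (vsub u' u) v u' ltac:(lra)) as HA.
  assert (Hdn : Rabs (vnorm u - vnorm u') <= vnorm (vsub u' u)).
  { pose proof (vnorm_rev_triangle u u') as T. rewrite vnorm_vsub_sym in T. auto. }
  set (d := vnorm (vsub u' u)) in *. pose proof (vnorm_nonneg (vsub u' u)) as Hd0. fold d in Hd0.
  set (n := vnorm u) in *. set (n' := vnorm u') in *.
  assert (HB : vnorm (vscale (cross u v) (vadd (vscale (/ (vnorm2 u' * vnorm2 u')) (Jrot (vsub u' u)))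
                 (vscale (/ (vnorm2 u' * vnorm2 u') - / (vnorm2 u * vnorm2 u)) (Jrot u)))) <=
               M * (d * n / (n' * n' * (n' * n')) +
                    d * (n + n') * (n * n + n' * n') / (n * n * (n' * n' * (n' * n'))))).
  { rewrite vnorm_scale. pose proof (cross_bound u v) as Cb. fold n in Cb.
    apply Rle_trans with (n * M * (d / (n' * n' * (n' * n')) +
        d * (n + n') * (n * n + n' * n') / (n * n * (n * n) * (n' * n' * (n' * n'))) * n)).
    2: { right. field. lra. }
    apply Rmult_le_compat; try apply Rabs_pos; try apply vnorm_nonneg.
    - eapply Rle_trans; [apply Cb|]. apply Rmult_le_compat_l; lra.
    - eapply Rle_trans; [apply vnorm_triangle|]. rewrite !vnorm_scale, !Jrot_norm. fold d n.
      rewrite E, E'. apply Rplus_le_compat.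
      + rewrite Rabs_inv, Rabs_right by nra. right. field. lra.
      + apply Rmult_le_compat_r; [lra|]. apply inv_pow4_diff; lra. }
  pose proof (reparam_accel_lip_coeff n n' d m Hm Hn Hn' Hdn Small) as SC.
  replace (25 * M * d / (m * m * m)) with (M * (25 * d / (m * m * m))) by (field; lra).
  assert (vnorm v * (d / (n' * n' * n')) <= M * (d / (n' * n' * n')))
    by (apply Rmult_le_compat_r; auto; apply Rdiv_le_0_compat; [lra|]; repeat apply Rmult_lt_0_compat; lra).
  assert (0 <= M) by lra.
  assert (M * (d / (n' * n' * n') + d * n / (n' * n' * (n' * n')) +
     d * (n + n') * (n * n + n' * n') / (n * n * (n' * n' * (n' * n')))) <= M * (25 * d / (m * m * m)))
    by (apply Rmult_le_compat_l; lra).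
  lra.
Qed.

Lemma reparam_accel_lipschitz :
  vnorm (vsub (reparam_accel u' v) (reparam_accel u v)) <= 25 * M * vnorm (vsub u' u) / (m * m * m).
Proof.
  destruct (Rle_dec (vnorm (vsub u' u)) (m / 2)).
  - apply reparam_accel_lipschitz_near; auto.
  - apply reparam_accel_lipschitz_far; lra.
Qed.

End ReparamAccelLipschitz.

Lemma reparam_accel_diff_sq u u' v v' m M : 0 < m -> m <= vnorm u -> m <= vnorm u' -> vnorm v <= M ->
  vnorm2 (vsub (reparam_accel u' v') (reparam_accel u v)) <=
  2 * (vnorm2 (vsub v' v) / (m * m * (m * m))) +
  2 * ((25 * M / (m * m * m)) * (25 * M / (m * m * m))) * vnorm2 (vsub u' u).
Proof.
  intros Hm Hn Hn' HM.
  replace (vsub (reparam_accel u' v') (reparam_accel u v))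
    with (vadd (reparam_accel u' (vsub v' v)) (vsub (reparam_accel u' v) (reparam_accel u v))).
  2: { rewrite <- reparam_accel_sub.
       destruct (reparam_accel u' v'), (reparam_accel u' v), (reparam_accel u v);
       unfold vadd, vsub; simpl; f_equal; ring. }
  set (X := vnorm (vsub v' v) / (m * m)). set (Y := 25 * M * vnorm (vsub u' u) / (m * m * m)).
  assert (B1 : vnorm (reparam_accel u' (vsub v' v)) <= X).
  { eapply Rle_trans; [apply reparam_accel_bound; lra|].
    destruct (vnorm2_pos_of_vnorm u' ltac:(lra)) as [-> _].
    unfold X, Rdiv. apply Rmult_le_compat_l; [apply vnorm_nonneg|]. apply Rinv_le_contravar; nra. }
  pose proof (reparam_accel_lipschitz u u' v m M Hm Hn Hn' HM) as B2. fold Y in B2.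
  pose proof (vnorm_triangle (reparam_accel u' (vsub v' v))
                (vsub (reparam_accel u' v) (reparam_accel u v))) as T.
  replace (2 * (vnorm2 (vsub v' v) / (m * m * (m * m))) +
     2 * (25 * M / (m * m * m) * (25 * M / (m * m * m))) * vnorm2 (vsub u' u)) with (2 * (X * X) + 2 * (Y * Y))
    by (unfold X, Y; rewrite <- !vnorm_sq; field; lra).
  rewrite <- vnorm_sq.
  set (W := vnorm (vadd (reparam_accel u' (vsub v' v)) (vsub (reparam_accel u' v) (reparam_accel u v)))) in *.
  pose proof (vnorm_nonneg (reparam_accel u' (vsub v' v))).
  pose proof (vnorm_nonneg (vsub (reparam_accel u' v) (reparam_accel u v))).
  assert (0 <= W) by apply vnorm_nonneg.
  assert (W * W <= (X + Y) * (X + Y)) by (apply Rmult_le_compat; lra).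
  pose proof (Rle_0_sqr (X - Y)). unfold Rsqr in *. nra.
Qed.

Lemma Rmin_le_dist_period x D (k : Z) : 0 <= D <= 2 * PI -> (x = D \/ x = - D) ->
  Rmin D (2 * PI - D) <= Rabs (x - 2 * PI * IZR k).
Proof.
  intros HD Hx. pose proof PI_RGT_0.
  pose proof (Rmin_l D (2 * PI - D)); pose proof (Rmin_r D (2 * PI - D)).
  assert (Hk : (k <= -1)%Z \/ k = 0%Z \/ (1 <= k)%Z) by lia.
  destruct Hk as [K|[K|K]]; [apply IZR_le in K|subst k; simpl|apply IZR_le in K];
    destruct Hx as [E|E]; subst x;
    first [rewrite Rabs_right by nra; nra | rewrite Rabs_left1 by nra; nra].
Qed.

Lemma const_speed_pos y y1 c : (forall s t, - PI <= s < PI -> - PI <= t < PI -> y s = y t -> s = t) ->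
  Dc y y1 -> (forall t, vnorm (y1 t) = c) -> 0 < c.
Proof.
  intros Hinj [Dx Dy] Hc. pose proof PI_RGT_0.
  destruct (vnorm_nonneg (y1 0)) as [P|E]; [rewrite Hc in P; auto|]. exfalso. rewrite Hc in E.
  assert (Z : forall t, fst (y1 t) = 0 /\ snd (y1 t) = 0).
  { intros t. pose proof (vnorm_fst (y1 t)) as H1; pose proof (vnorm_snd (y1 t)) as H2.
    rewrite Hc, <- E in H1, H2. apply Rabs_le_inv in H1, H2. lra. }
  assert (Const : forall g : R -> R, (forall t, derivable_pt_lim g t 0) -> g 0 = g (- PI)).
  { intros g Dg. destruct (MVT_cor2 g (fun _ => 0) (- PI) 0) as [e [He _]]; [lra|auto|lra]. }
  assert (Ex : fst (y 0) = fst (y (- PI)))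
    by (apply (Const (fun t => fst (y t))); intros t; rewrite <- (proj1 (Z t)); auto).
  assert (Ey : snd (y 0) = snd (y (- PI)))
    by (apply (Const (fun t => snd (y t))); intros t; rewrite <- (proj2 (Z t)); auto).
  assert (y 0 = y (- PI)) by (destruct (y 0), (y (- PI)); simpl in *; subst; auto).
  assert (0 = - PI) by (apply Hinj; auto; lra). lra.
Qed.

(** * Regular curves *)

(* [S] bounds the Riesz sums of [z''], i.e. it plays the role of ||z'''||_{L^2}^2, and [f] is the
   arc-chord constant F. *)
Definition regular_curve (z z1 z2 : curve) (S f : R) : Prop :=
  periodic z /\ Dc z z1 /\ Dc z1 z2 /\ 0 <= S /\
  (forall l, partition l -> rsum z2 (- PI) l <= S) /\ 1 <= f /\
  (forall xi eta, inT xi -> inT eta -> eta <> 0 ->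
     z xi <> z (xi - eta) /\ Rabs eta / vdist (z xi) (z (xi - eta)) <= f).

Definition accel_bound (S : R) : R := sqrt (2 * PI * S).
Definition speed_bound (S : R) : R := 4 * PI * accel_bound S.

Lemma accel_bound_nonneg S : 0 <= accel_bound S.
Proof. apply sqrt_pos. Qed.

Lemma accel_bound_le S : 0 <= S -> accel_bound S <= 3 * sqrt S.
Proof.
  intros HS. pose proof PI_4. pose proof (sqrt_pos S). pose proof (sqrt_sqrt S HS).
  apply sqrt_le_of_sq; nra.
Qed.

Lemma speed_bound_le S : 0 <= S -> speed_bound S <= 48 * sqrt S.
Proof.
  intros HS. pose proof PI_4. pose proof PI_RGT_0. pose proof (accel_bound_le S HS).
  pose proof (accel_bound_nonneg S). unfold speed_bound. nra.
Qed.

(* 4 * 48^5 + 160000 * 48^5 * 3^4 < 10^16 *)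
Definition riesz_const : R := 10000000000000000.

Lemma param_riesz_bound_le c f S : 0 <= S -> 1 <= f -> 0 <= c <= speed_bound S ->
  (2 * c ^ 5 * f ^ 5) * (2 * S) + (20000 * c ^ 5 * f ^ 7 * accel_bound S ^ 4) * (2 * PI) <=
  riesz_const * (sqrt S ^ 7 * f ^ 5 + sqrt S ^ 9 * f ^ 7).
Proof.
  intros HS Hf Hc. pose proof PI_4. pose proof PI_RGT_0.
  set (b := sqrt S). assert (Hb : b * b = S) by (apply sqrt_sqrt; auto).
  assert (Hb0 : 0 <= b) by apply sqrt_pos.
  pose proof (speed_bound_le S HS) as Hcb. pose proof (accel_bound_le S HS) as Hq.
  fold b in Hcb, Hq.
  set (q := accel_bound S) in *. assert (Hq0 : 0 <= q) by apply accel_bound_nonneg.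
  assert (Hc5 : c ^ 5 <= (48 * b) ^ 5) by (apply pow_incr; lra).
  assert (Hq4 : q ^ 4 <= (3 * b) ^ 4) by (apply pow_incr; lra).
  assert (0 <= c ^ 5) by (apply pow_le; lra). assert (0 <= q ^ 4) by (apply pow_le; lra).
  assert (0 <= f ^ 5) by (apply pow_le; lra). assert (0 <= f ^ 7) by (apply pow_le; lra).
  assert (T1 : 2 * c ^ 5 * f ^ 5 * (2 * S) <= 4 * 48 ^ 5 * (b ^ 7 * f ^ 5)).
  { replace (4 * 48 ^ 5 * (b ^ 7 * f ^ 5)) with (4 * ((48 * b) ^ 5 * f ^ 5) * (b * b)) by ring.
    rewrite <- Hb.
    assert (c ^ 5 * f ^ 5 <= (48 * b) ^ 5 * f ^ 5) by (apply Rmult_le_compat_r; auto).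
    assert (0 <= b * b) by nra. nra. }
  assert (T2 : 20000 * c ^ 5 * f ^ 7 * q ^ 4 * (2 * PI) <= 160000 * 48 ^ 5 * 3 ^ 4 * (b ^ 9 * f ^ 7)).
  { assert (c ^ 5 * f ^ 7 * q ^ 4 <= (48 * b) ^ 5 * f ^ 7 * (3 * b) ^ 4).
    { apply Rmult_le_compat; [nra|lra|apply Rmult_le_compat_r; auto|auto]. }
    assert (0 <= c ^ 5 * f ^ 7 * q ^ 4) by (repeat apply Rmult_le_pos; lra).
    replace (160000 * 48 ^ 5 * 3 ^ 4 * (b ^ 9 * f ^ 7)) with (160000 * ((48 * b) ^ 5 * f ^ 7 * (3 * b) ^ 4))
      by ring.
    nra. }
  assert (0 <= b ^ 7 * f ^ 5) by (apply Rmult_le_pos; apply pow_le; lra).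
  assert (0 <= b ^ 9 * f ^ 7) by (apply Rmult_le_pos; apply pow_le; lra).
  unfold riesz_const. lra.
Qed.

Lemma arc_chord_of_chord_lower c f M b eta d : 1 <= f -> / f <= c -> 0 < M <= 48 * b ->
  eta <> 0 -> c / M * Rabs eta <= f * d -> 0 < d /\ Rabs eta / d <= 48 * f * f * b.
Proof.
  intros Hf Hc HM Hne Hcd.
  assert (Hf0 : 0 < / f) by (apply Rinv_0_lt_compat; lra).
  assert (Hcm : 0 < c / M) by (apply Rdiv_lt_0_compat; lra).
  assert (He : 0 < Rabs eta) by (apply Rabs_pos_lt; auto).
  assert (Hd : 0 < d) by (apply (Rmult_lt_reg_l f); nra).
  split; auto.
  apply (Rmult_le_reg_r d); auto. unfold Rdiv. rewrite Rmult_assoc, Rinv_l, Rmult_1_r by lra.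
  assert (Rabs eta <= f * M / c * d).
  { apply (Rmult_le_reg_l (c / M)); auto.
    replace (c / M * (f * M / c * d)) with (f * d) by (field; lra). lra. }
  assert (f * M / c <= 48 * f * f * b).
  { apply (Rmult_le_reg_r c); [lra|]. unfold Rdiv. rewrite Rmult_assoc, Rinv_l, Rmult_1_r by lra.
    assert (1 <= f * c) by (rewrite <- (Rinv_r f) by lra; apply Rmult_le_compat_l; lra).
    assert (0 <= 48 * f * b) by nra. nra. }
  nra.
Qed.

Lemma riesz_quot_rescale c f D G Dv dt l : 0 < c -> 0 < f -> 0 < dt <= c * f * l -> 0 <= D ->
  0 <= G <= 2 * f ^ 4 * Dv + D * (dt * dt) ->
  c * c * (c * c) * G / l <= 2 * c ^ 5 * f ^ 5 * (Dv / dt) + c ^ 5 * f * D * dt.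
Proof.
  intros Hc Hf Hdt HD HG.
  assert (Hcf : 0 < c * f) by nra.
  assert (Hl : 0 < l) by (apply (Rmult_lt_reg_l (c * f)); nra).
  assert (Hinv : / l <= c * f / dt).
  { apply (Rmult_le_reg_r l); [lra|]. rewrite Rinv_l by lra.
    apply (Rmult_le_reg_l dt); [lra|]. unfold Rdiv.
    replace (dt * (c * f * / dt * l)) with (c * f * l) by (field; lra). nra. }
  assert (0 <= c * c * (c * c)) by nra.
  unfold Rdiv at 1.
  apply Rle_trans with (c * c * (c * c) * (2 * f ^ 4 * Dv + D * (dt * dt)) * (c * f / dt)).
  - apply Rmult_le_compat; try nra. left; apply Rinv_0_lt_compat; lra.
  - right. field. lra.
Qed.

Section RegularCurve.
Variables (z z1 z2 : curve) (S f : R).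
Hypothesis reg : regular_curve z z1 z2 S f.

Lemma periodic_z1 : periodic z1.
Proof. destruct reg as (Pz & D1 & _). eapply Dc_periodic; eauto. Qed.

Lemma periodic_z2 : periodic z2.
Proof. destruct reg as (_ & _ & D2 & _). eapply Dc_periodic; [apply periodic_z1|eauto]. Qed.

Lemma rsum_window_le a l : - PI <= a -> incr_from a l -> last l a <= PI -> rsum z2 a l <= S.
Proof.
  intros Ha Hl Hlast. destruct reg as (_ & _ & _ & HS0 & HS & _).
  set (l1 := if Rlt_dec (- PI) a then a :: l else l).
  assert (E1 : rsum z2 a l <= rsum z2 (- PI) l1 /\ incr_from (- PI) l1 /\ last l1 (- PI) = last l a).
  { unfold l1. destruct (Rlt_dec (- PI) a).
    - pose proof (riesz_quot_nonneg z2 (- PI) a r). unfold riesz_quot in *.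
      rewrite last_cons. simpl. repeat split; auto; lra.
    - assert (a = - PI) by lra. subst a. repeat split; auto; lra. }
  destruct E1 as (E1a & E1b & E1c).
  destruct (Rlt_dec (last l1 (- PI)) PI) as [Hlt|Hge].
  - assert (P : partition (l1 ++ PI :: nil)).
    { split; [destruct l1; discriminate|split; [apply incr_from_app; auto|apply last_last]]. }
    specialize (HS _ P). rewrite rsum_chain_sum, chain_sum_app1, <- rsum_chain_sum in HS.
    pose proof (riesz_quot_nonneg z2 _ _ Hlt). lra.
  - destruct l1 as [|x l1'] eqn:EL.
    + simpl in Hge. pose proof PI_RGT_0. lra.
    + assert (P : partition (x :: l1')).
      { split; [discriminate|split; auto]. rewrite (last_default _ 0 (- PI)) by discriminate. lra. }
      specialize (HS _ P). lra.
Qed.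

Lemma z2_holder s t : - PI <= s -> s < t -> t <= PI -> vnorm2 (vsub (z2 t) (z2 s)) <= S * (t - s).
Proof.
  intros Hs Hst Ht.
  pose proof (rsum_window_le s (t :: nil) Hs ltac:(simpl; tauto) ltac:(simpl; lra)) as H.
  simpl in H. rewrite Rplus_0_r in H.
  apply (Rmult_le_compat_r (t - s)) in H; [|lra].
  unfold Rdiv in H. rewrite Rmult_assoc, Rinv_l, Rmult_1_r in H by lra. lra.
Qed.

Lemma z2_oscillation s t : - PI <= s <= PI -> - PI <= t <= PI ->
  vnorm (vsub (z2 s) (z2 t)) <= accel_bound S.
Proof.
  intros Hs Ht. pose proof reg as (_ & _ & _ & HS0 & _). pose proof PI_RGT_0.
  apply sqrt_le_1_alt. destruct (Rtotal_order s t) as [Hlt|[->|Hgt]].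
  - rewrite vnorm2_vsub_sym. pose proof (z2_holder s t ltac:(lra) Hlt ltac:(lra)). nra.
  - unfold vnorm2, vsub. simpl. unfold Rminus. rewrite !Rplus_opp_r. nra.
  - pose proof (z2_holder t s ltac:(lra) Hgt ltac:(lra)). nra.
Qed.

Lemma z2_comp_bound t : Rabs (fst (z2 t)) <= accel_bound S /\ Rabs (snd (z2 t)) <= accel_bound S.
Proof.
  pose proof reg as (_ & _ & [D2x D2y] & _).
  pose proof periodic_z1 as P1. pose proof periodic_z2 as P2.
  split.
  - apply (periodic_deriv_bound (fun t => fst (z1 t)) (fun t => fst (z2 t)));
      [intros; rewrite P1; auto|intros; rewrite P2; auto|auto|intros s t' Hs Ht'].
    eapply Rle_trans; [apply (vnorm_fst (vsub (z2 s) (z2 t')))|apply z2_oscillation; auto].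
  - apply (periodic_deriv_bound (fun t => snd (z1 t)) (fun t => snd (z2 t)));
      [intros; rewrite P1; auto|intros; rewrite P2; auto|auto|intros s t' Hs Ht'].
    eapply Rle_trans; [apply (vnorm_snd (vsub (z2 s) (z2 t')))|apply z2_oscillation; auto].
Qed.

Lemma z2_bound t : vnorm (z2 t) <= 2 * accel_bound S.
Proof. destruct (z2_comp_bound t). apply vnorm_le_of_comp; auto. apply accel_bound_nonneg. Qed.

Lemma z1_lipschitz x x' : vnorm (vsub (z1 x') (z1 x)) <= 2 * accel_bound S * Rabs (x' - x).
Proof.
  pose proof reg as (_ & _ & [D1x D1y] & _).
  rewrite Rmult_assoc. apply vnorm_le_of_comp.
  - apply Rmult_le_pos; [apply accel_bound_nonneg|apply Rabs_pos].
  - apply (mvt_lipschitz (fun t => fst (z1 t)) (fun t => fst (z2 t))); auto.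
    intros; apply z2_comp_bound.
  - apply (mvt_lipschitz (fun t => snd (z1 t)) (fun t => snd (z2 t))); auto.
    intros; apply z2_comp_bound.
Qed.

Lemma z1_comp_bound t :
  Rabs (fst (z1 t)) <= 2 * PI * accel_bound S /\ Rabs (snd (z1 t)) <= 2 * PI * accel_bound S.
Proof.
  pose proof reg as (Pz & [D1x D1y] & _). pose proof periodic_z1 as P1. pose proof PI_RGT_0.
  assert (Osc : forall s t, - PI <= s <= PI -> - PI <= t <= PI ->
             accel_bound S * Rabs (s - t) <= 2 * PI * accel_bound S).
  { intros s t0 Hs Ht. pose proof (accel_bound_nonneg S).
    assert (Rabs (s - t0) <= 2 * PI) by (apply Rabs_le; lra). nra. }
  pose proof reg as (_ & _ & [D2x D2y] & _).
  split.
  - apply (periodic_deriv_bound (fun t => fst (z t)) (fun t => fst (z1 t)));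
      [intros; rewrite Pz; auto|intros; rewrite P1; auto|auto|intros s t' Hs Ht'].
    eapply Rle_trans; [|apply (Osc s t'); auto].
    apply (mvt_lipschitz (fun t => fst (z1 t)) (fun t => fst (z2 t))); auto.
    intros; apply z2_comp_bound.
  - apply (periodic_deriv_bound (fun t => snd (z t)) (fun t => snd (z1 t)));
      [intros; rewrite Pz; auto|intros; rewrite P1; auto|auto|intros s t' Hs Ht'].
    eapply Rle_trans; [|apply (Osc s t'); auto].
    apply (mvt_lipschitz (fun t => snd (z1 t)) (fun t => snd (z2 t))); auto.
    intros; apply z2_comp_bound.
Qed.

Lemma z1_bound t : vnorm (z1 t) <= speed_bound S.
Proof.
  destruct (z1_comp_bound t). unfold speed_bound.
  replace (4 * PI * accel_bound S) with (2 * (2 * PI * accel_bound S)) by ring.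
  apply vnorm_le_of_comp; auto. pose proof PI_RGT_0; pose proof (accel_bound_nonneg S); nra.
Qed.


Lemma param_gap_mod_le a b : exists k : Z,
  Rabs (a - b - 2 * PI * IZR k) <= PI /\ Rabs (a - b - 2 * PI * IZR k) <= f * vdist (z a) (z b).
Proof.
  pose proof reg as (Pz & _ & _ & _ & _ & Hf & HF). pose proof PI_RGT_0.
  destruct (exists_shift_into_T a) as [k1 Hk1]. set (a' := a + 2 * PI * IZR k1) in *.
  destruct (exists_round ((a' - b) / (2 * PI))) as [k Hk].
  set (eta := a' - b - 2 * PI * IZR k).
  assert (Heta : Rabs eta <= PI).
  { unfold eta. replace (a' - b - 2 * PI * IZR k) with (2 * PI * ((a' - b) / (2 * PI) - IZR k))
      by (field; lra).
    rewrite Rabs_mult, Rabs_right by lra. nra. }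
  exists (k - k1)%Z. rewrite minus_IZR.
  replace (a - b - 2 * PI * (IZR k - IZR k1)) with eta by (unfold eta, a'; ring).
  split; auto.
  assert (Ea : z a = z a') by (unfold a'; rewrite periodic_Z; auto).
  assert (Eb : z b = z (a' - eta)).
  { replace (a' - eta) with (b + 2 * PI * IZR k) by (unfold eta; ring). rewrite periodic_Z; auto. }
  rewrite Ea, Eb. apply Rabs_le_inv in Heta.
  destruct (Req_dec eta 0) as [->|Nz].
  - rewrite Rabs_R0. apply Rmult_le_pos; [lra|apply vdist_nonneg].
  - destruct (HF a' eta) as [Hne Hq]; unfold inT; try lra; auto.
    pose proof (vdist_pos _ _ Hne) as Hp.
    apply (Rmult_le_compat_r (vdist (z a') (z (a' - eta)))) in Hq; [|lra].
    unfold Rdiv in Hq. rewrite Rmult_assoc, Rinv_l in Hq by lra. lra.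
Qed.

Lemma same_point_period a b : z a = z b -> exists k : Z, a = b + 2 * PI * IZR k.
Proof.
  intros E. destruct (param_gap_mod_le a b) as [k [_ Hk]].
  rewrite E, vdist_self, Rmult_0_r in Hk. exists k.
  pose proof (Rabs_pos (a - b - 2 * PI * IZR k)). apply Rabs_le_inv in Hk. lra.
Qed.

Lemma same_point_derivs a b : z a = z b -> z1 a = z1 b /\ z2 a = z2 b.
Proof.
  intros E. destruct (same_point_period a b E) as [k ->].
  split; apply periodic_Z; [apply periodic_z1|apply periodic_z2].
Qed.

Lemma param_gap_le_of_lt_PI a b : Rabs (a - b) < PI -> Rabs (a - b) <= f * vdist (z a) (z b).
Proof.
  intros H. destruct (param_gap_mod_le a b) as [k [H1 H2]]. pose proof PI_RGT_0.
  assert (Hk : k = 0%Z).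
  { apply IZR_bounded_0. apply Rabs_le_inv in H1. apply Rabs_def2 in H.
    split; [destruct (Rle_dec (IZR k) (-1))|destruct (Rle_dec 1 (IZR k))]; nra. }
  subst k. replace (a - b - 2 * PI * IZR 0) with (a - b) in H2 by (simpl; ring). auto.
Qed.

Lemma param_gap_le_of_small a b : Rabs (a - b) + f * vdist (z a) (z b) < 2 * PI ->
  Rabs (a - b) <= f * vdist (z a) (z b).
Proof.
  intros H. destruct (param_gap_mod_le a b) as [k [H1 H2]]. pose proof PI_RGT_0.
  assert (Hk : k = 0%Z).
  { apply IZR_bounded_0.
    pose proof (Rabs_triang (a - b) (- (a - b - 2 * PI * IZR k))) as T. rewrite Rabs_Ropp in T.
    replace (a - b + - (a - b - 2 * PI * IZR k)) with (2 * PI * IZR k) in T by ring.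
    rewrite Rabs_mult, (Rabs_right (2 * PI)) in T by lra.
    assert (Hk1 : Rabs (IZR k) < 1) by nra. apply Rabs_def2 in Hk1. lra. }
  subst k. replace (a - b - 2 * PI * IZR 0) with (a - b) in H2 by (simpl; ring). auto.
Qed.

(* Over a short step h the chord is h |z1 t| + o(h), while the arc-chord bound makes it >= h / f. *)
Lemma speed_lower t : / f <= vnorm (z1 t).
Proof.
  pose proof reg as (_ & Dz & _ & _ & _ & Hf & _). pose proof PI_RGT_0.
  destruct (Rle_dec (/ f) (vnorm (z1 t))) as [|Hn]; auto. exfalso. apply Rnot_le_lt in Hn.
  set (eps := (/ f - vnorm (z1 t)) / 2).
  destruct (Dc_first_order z z1 t eps Dz) as [d [Hd Hfo]]; [unfold eps; lra|].
  destruct (exists_pos_lt_both d PI Hd PI_RGT_0) as [h [Hh0 [Hhd HhPI]]].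
  assert (Hah : Rabs h = h) by (apply Rabs_right; lra).
  specialize (Hfo h ltac:(lra)). rewrite Hah in Hfo.
  pose proof (param_gap_le_of_lt_PI (t + h) t) as Hs.
  replace (t + h - t) with h in Hs by ring. rewrite Hah in Hs. specialize (Hs HhPI).
  assert (Hchord : vdist (z (t + h)) (z t) <= h * vnorm (z1 t) + eps * h).
  { unfold vdist.
    replace (vsub (z (t + h)) (z t)) with
      (vadd (vscale h (z1 t)) (vsub (vsub (z (t + h)) (z t)) (vscale h (z1 t))))
      by (destruct (z (t + h)), (z t), (z1 t); unfold vadd, vsub, vscale; simpl; f_equal; ring).
    eapply Rle_trans; [apply vnorm_triangle|]. rewrite vnorm_scale, Hah. lra. }
  assert (Hfinv : f * / f = 1) by (field; lra).
  assert (f * (h * vnorm (z1 t) + eps * h) < h).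
  { unfold eps. replace (f * (h * vnorm (z1 t) + (/ f - vnorm (z1 t)) / 2 * h))
      with (h * (f * vnorm (z1 t) + 1) / 2) by (field; lra).
    assert (f * vnorm (z1 t) < 1) by (rewrite <- Hfinv; apply Rmult_lt_compat_l; lra). nra. }
  assert (f * vdist (z (t + h)) (z t) <= f * (h * vnorm (z1 t) + eps * h)) by (apply Rmult_le_compat_l; lra).
  lra.
Qed.

Lemma z1_vnorm2_pos t : 0 < vnorm2 (z1 t).
Proof.
  pose proof (speed_lower t). pose proof reg as (_ & _ & _ & _ & _ & Hf & _).
  assert (0 < / f) by (apply Rinv_0_lt_compat; lra). rewrite <- vnorm_sq. nra.
Qed.

Lemma z1_vnorm_pos t : 0 < vnorm (z1 t).
Proof. apply vnorm_pos. pose proof (z1_vnorm2_pos t). lra. Qed.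

Lemma speed_bound_pos : 0 < speed_bound S.
Proof. pose proof (z1_bound 0). pose proof (z1_vnorm_pos 0). lra. Qed.

Lemma curve_avoids_ball p : ~ on_curve z p -> exists r, 0 < r /\ forall t, r <= vdist (z t) p.
Proof.
  intros Hp. pose proof reg as (Pz & [Dx Dy] & _). pose proof PI_RGT_0.
  set (h := fun t => vnorm2 (vsub (z t) p)).
  destruct (continuity_ab_min h (- PI) PI) as [mx [Hmx Hmr]]; [lra| |].
  { intros c _. unfold h, vnorm2, vsub; simpl.
    assert (Cx : continuity_pt (fun t => fst (z t)) c) by (apply derivable_continuous_pt; eexists; apply Dx).
    assert (Cy : continuity_pt (fun t => snd (z t)) c) by (apply derivable_continuous_pt; eexists; apply Dy).
    apply continuity_pt_plus'; apply continuity_pt_mult'; apply continuity_pt_minus';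
      auto using continuity_pt_const'. }
  assert (Hpos : 0 < h mx).
  { unfold h. destruct (vnorm2_nonneg (vsub (z mx) p)) as [|E]; auto.
    exfalso. apply Hp. exists mx. apply vdist_eq0. unfold vdist, vnorm. rewrite <- E. apply sqrt_0.
    }
  exists (sqrt (h mx)). split; [apply sqrt_lt_R0; auto|].
  intros t. destruct (periodic_reduce z Pz t) as [t' [Ht' ->]].
  apply sqrt_le_1_alt. apply Hmx. lra.
Qed.

Lemma boundary_on_curve p : boundary (curve_interior z) p -> on_curve z p.
Proof.
  intros Hb. apply Classical_Prop.NNPP. intros Hn.
  destruct (curve_avoids_ball p Hn) as [r [Hr Hd]].
  destruct (boundary_near_curve z p Hb r Hr) as [q [Hq [t <-]]].
  specialize (Hd t). lra.
Qed.


Lemma chain_sum_shift (g : curve) (k : Z) a l : periodic g ->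
  chain_sum (riesz_quot g) (a + 2 * PI * IZR k) (map (fun x => x + 2 * PI * IZR k) l) =
  chain_sum (riesz_quot g) a l.
Proof.
  intros Pg. rewrite (chain_sum_map (riesz_quot g) (fun x => x + 2 * PI * IZR k)).
  apply chain_sum_ext. intros x x'. unfold riesz_quot. rewrite !periodic_Z by auto. f_equal. ring.
Qed.

(* A chain starting in [-PI, PI] and ending before 3 PI is split at PI; the part beyond PI is
   shifted back by one period, and the two halves are each partitions of T. *)
Lemma chain_sum_two_periods l a p : - PI <= a <= PI -> incr_from a l -> last l a <= 3 * PI ->
  incr_from (- PI) p -> last p (- PI) = a ->
  chain_sum (riesz_quot z2) (- PI) p + chain_sum (riesz_quot z2) a l <= 2 * S.
Proof.
  pose proof reg as (_ & _ & _ & HS0 & _). pose proof periodic_z2 as P2. pose proof PI_RGT_0.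
  revert a p. induction l as [|b l IH]; intros a p Ha Hl Hlast Hp Hpl.
  - simpl. rewrite <- rsum_chain_sum. pose proof (rsum_window_le (- PI) p ltac:(lra) Hp ltac:(lra)).
    lra.
  - destruct Hl as [Hab Hl]. rewrite last_cons in Hlast. cbn [chain_sum].
    destruct (Rle_dec b PI) as [Hb|Hb].
    + specialize (IH b (p ++ b :: nil) ltac:(lra) Hl Hlast).
      rewrite chain_sum_app1, Hpl in IH.
      specialize (IH (incr_from_app _ _ b Hp ltac:(rewrite Hpl; lra)) (last_last p b (- PI))). lra.
    + assert (H2 : chain_sum (riesz_quot z2) PI (b :: l) <= S).
      { rewrite <- (chain_sum_shift z2 (-1) PI (b :: l) P2).
        replace (PI + 2 * PI * IZR (-1)) with (- PI) by (simpl; ring).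
        rewrite <- rsum_chain_sum. apply rsum_window_le; [lra| |].
        - pose proof (incr_from_shift (2 * PI * IZR (-1)) PI (b :: l) ltac:(split; [lra|auto])) as I.
          replace (PI + 2 * PI * IZR (-1)) with (- PI) in I by (simpl; ring). exact I.
        - rewrite (last_default _ (- PI) (PI + 2 * PI * IZR (-1))) by discriminate.
          pose proof (last_map (fun x => x + 2 * PI * IZR (-1)) PI (b :: l)) as LM.
          cbv beta in LM. rewrite LM, last_cons. simpl IZR. lra. }
      cbn [chain_sum] in H2.
      destruct (Req_dec a PI) as [->|Na].
      * pose proof (rsum_window_le (- PI) p ltac:(lra) Hp ltac:(lra)) as Hr.
        rewrite rsum_chain_sum in Hr. lra.
      * assert (H1 : chain_sum (riesz_quot z2) (- PI) (p ++ PI :: nil) <= S).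
        { rewrite <- rsum_chain_sum. apply rsum_window_le; [lra| |rewrite last_last; lra].
          apply incr_from_app; auto. lra. }
        rewrite chain_sum_app1, Hpl in H1.
        pose proof (riesz_quot_refine z2 a PI b ltac:(lra) ltac:(lra)). lra.
Qed.

Lemma chain_sum_period_window a l : incr_from a l -> last l a <= a + 2 * PI ->
  chain_sum (riesz_quot z2) a l <= 2 * S.
Proof.
  intros Hl Hlast. pose proof periodic_z2 as P2. pose proof PI_RGT_0.
  destruct (exists_shift_into_T a) as [k Hk].
  rewrite <- (chain_sum_shift z2 k a l P2).
  set (T := 2 * PI * IZR k) in *. set (a' := a + T) in *.
  assert (Hl' : incr_from a' (map (fun x => x + T) l)) by (apply incr_from_shift; auto).
  assert (Hlast' : last (map (fun x => x + T) l) a' <= 3 * PI).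
  { unfold a' in *. pose proof (last_map (fun x => x + T) a l) as LM. cbv beta in LM. rewrite LM. lra. }
  destruct (Req_dec a' (- PI)) as [E|NE].
  - pose proof (chain_sum_two_periods _ a' nil ltac:(lra) Hl' Hlast' I ltac:(simpl; lra)) as Hsum.
    simpl in Hsum. lra.
  - pose proof (chain_sum_two_periods _ a' (a' :: nil) ltac:(lra) Hl' Hlast'
                  ltac:(simpl; split; [lra|auto]) ltac:(reflexivity)) as Hsum.
    simpl in Hsum. pose proof (riesz_quot_nonneg z2 (- PI) a' ltac:(lra)). lra.
Qed.

Lemma chain_sum_abs_period_window a l :
  (incr_from a l /\ last l a <= a + 2 * PI) \/ (decr_from a l /\ a - 2 * PI <= last l a) ->
  chain_sum (riesz_quot_abs z2) a l <= 2 * S.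
Proof.
  assert (E : forall x x', x < x' -> riesz_quot_abs z2 x x' = riesz_quot z2 x x').
  { intros x x' Hx. unfold riesz_quot_abs, riesz_quot. rewrite Rabs_right by lra. auto. }
  intros [[Hl Hlast]|[Hl Hlast]].
  - rewrite (chain_sum_ext_incr _ _ a l Hl E). apply chain_sum_period_window; auto.
  - destruct (decr_from_rev z2 a l Hl) as [a' [l' [H1 [H2 [H3 ->]]]]].
    rewrite (chain_sum_ext_incr _ _ a' l' H1 E). apply chain_sum_period_window; auto. lra.
Qed.


Lemma reparam_accel_chord_sq x x' :
  vnorm2 (vsub (reparam_accel (z1 x') (z2 x')) (reparam_accel (z1 x) (z2 x))) <=
  2 * f ^ 4 * vnorm2 (vsub (z2 x') (z2 x)) + 20000 * accel_bound S ^ 4 * f ^ 6 * ((x' - x) * (x' - x)).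
Proof.
  pose proof reg as (_ & _ & _ & _ & _ & Hf & _).
  assert (Hm : 0 < / f) by (apply Rinv_0_lt_compat; lra).
  pose proof (reparam_accel_diff_sq (z1 x) (z1 x') (z2 x) (z2 x') (/ f) (2 * accel_bound S) Hm
      (speed_lower _) (speed_lower _) (z2_bound _)) as GD.
  replace (25 * (2 * accel_bound S) / (/ f * / f * / f)) with (50 * accel_bound S * (f * f * f)) in GD
    by (field; lra).
  replace (2 * (vnorm2 (vsub (z2 x') (z2 x)) / (/ f * / f * (/ f * / f)))) with
    (2 * f ^ 4 * vnorm2 (vsub (z2 x') (z2 x))) in GD by (field; lra).
  pose proof (z1_lipschitz x x') as ZL. apply vnorm2_le_of_vnorm in ZL.
  set (q := accel_bound S) in *. assert (Hq : 0 <= q) by apply accel_bound_nonneg.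
  assert (E : (x' - x) * (x' - x) = Rabs (x' - x) * Rabs (x' - x)).
  { rewrite <- Rabs_mult. symmetry. apply Rabs_right. apply Rle_ge, Rle_0_sqr. }
  eapply Rle_trans; [apply GD|]. apply Rplus_le_compat_l. rewrite E.
  replace (20000 * q ^ 4 * f ^ 6 * (Rabs (x' - x) * Rabs (x' - x))) with
    (2 * (50 * q * (f * f * f) * (50 * q * (f * f * f))) * ((2 * q * Rabs (x' - x)) * (2 * q * Rabs (x' - x))))
    by ring.
  apply Rmult_le_compat_l; auto. nra.
Qed.

(** * Lifting a constant speed parametrization *)

Definition speed_param_on (y y1 : curve) (c : R) : Prop :=
  periodic y /\ Dc y y1 /\ (forall t, vnorm (y1 t) = c) /\ 0 < c /\ (forall t, on_curve z (y t)).

Definition lift_on (y : curve) (a b : R) (L : R -> R) (K : R) : Prop :=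
  0 <= K /\ (forall s, a < s < b -> z (L s) = y s) /\
  exists d0, 0 < d0 /\ forall s s', a < s < b -> a < s' < b -> Rabs (s - s') < d0 ->
    Rabs (L s - L s') <= K * Rabs (s - s').

Definition lift_rate (y1 : curve) (L : R -> R) (s : R) : R :=
  dotp (z1 (L s)) (y1 s) / vnorm2 (z1 (L s)).

Section Lift.
Variables (y y1 : curve) (c : R).
Hypothesis par : speed_param_on y y1 c.

Lemma y_lipschitz s s' : vdist (y s) (y s') <= 2 * c * Rabs (s - s').
Proof.
  pose proof par as (_ & [Dx Dy] & Hc & _).
  rewrite Rmult_assoc. apply vnorm_le_of_comp.
  - apply Rmult_le_pos; [pose proof (vnorm_nonneg (y1 0)); rewrite Hc in *; lra|apply Rabs_pos].
  - apply (mvt_lipschitz (fun t => fst (y t)) (fun t => fst (y1 t))); auto.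
    intros t. rewrite <- (Hc t). apply vnorm_fst.
  - apply (mvt_lipschitz (fun t => snd (y t)) (fun t => snd (y1 t))); auto.
    intros t. rewrite <- (Hc t). apply vnorm_snd.
Qed.

(* Dotting the two first-order expansions of z (L (s + h)) = y (s + h) with z1 (L s). *)
Lemma lift_deriv a b L K : lift_on y a b L K ->
  forall s, a < s < b -> derivable_pt_lim L s (lift_rate y1 L s).
Proof.
  intros (HK & HL & d0 & Hd0 & Hlip) s Hs eps Heps.
  pose proof par as (_ & Dy & _). pose proof reg as (_ & Dz & _).
  set (u := z1 (L s)).
  pose proof (z1_vnorm2_pos (L s)) as HU. fold u in HU. pose proof (vnorm_nonneg u) as Hu.
  set (e := eps * vnorm2 u / (2 * (vnorm u + 1) * (K + 1))).
  assert (He : 0 < e) by (unfold e; apply Rdiv_lt_0_compat; nra).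
  destruct (Dc_first_order z z1 (L s) e Dz He) as [dz [Hdz Hz]].
  destruct (Dc_first_order y y1 s e Dy He) as [dy [Hdy Hy]].
  destruct (open_interval_nbhd a b s Hs) as [dI [HdI HI]].
  set (d := Rmin (Rmin dy (dz / (K + 1))) (Rmin dI d0)).
  assert (Hd : 0 < d).
  { unfold d. repeat apply Rmin_pos; try lra. apply Rdiv_lt_0_compat; lra. }
  exists (mkposreal d Hd). intros h Hh Hhd. simpl in Hhd.
  assert (Bh : Rabs h < dy /\ Rabs h < dz / (K + 1) /\ a < s + h < b /\ Rabs h < d0).
  { destruct (Rlt_Rmin4 _ _ _ _ _ Hhd) as (? & ? & ? & ?). repeat split; auto; apply HI;
    replace (s + h - s) with h by ring; auto. }
  destruct Bh as (B1 & B2 & B3 & B4).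
  set (dt := L (s + h) - L s).
  assert (Hdt : Rabs dt <= K * Rabs h).
  { unfold dt. replace h with (s + h - s) at 2 by ring.
    apply Hlip; auto. replace (s + h - s) with h by ring. auto. }
  assert (Hdtz : Rabs dt < dz).
  { apply (Rmult_lt_compat_r (K + 1)) in B2; [|lra]. unfold Rdiv in B2.
    rewrite Rmult_assoc, Rinv_l, Rmult_1_r in B2 by lra. pose proof (Rabs_pos h). nra. }
  assert (E : vadd (vscale dt u) (vsub (vsub (z (L s + dt)) (z (L s))) (vscale dt u)) =
              vadd (vscale h (y1 s)) (vsub (vsub (y (s + h)) (y s)) (vscale h (y1 s)))).
  { rewrite !vadd_vsub_cancel. replace (L s + dt) with (L (s + h)) by (unfold dt; ring).
    rewrite !HL by lra. auto. }
  pose proof (dotp_quotient_bound u (y1 s) _ _ dt h e K ltac:(lra) Hh E (Hz dt Hdtz) (Hy h B1) Hdt) as Q.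
  unfold lift_rate. fold u. eapply Rle_lt_trans; [exact Q|].
  replace (vnorm u * (e * (1 + K)) / vnorm2 u) with (eps * (vnorm u / (vnorm u + 1)) / 2)
    by (unfold e; field; repeat split; lra).
  assert (vnorm u / (vnorm u + 1) < 1).
  { apply (Rmult_lt_reg_r (vnorm u + 1)); [lra|]. unfold Rdiv. rewrite Rmult_assoc, Rinv_l by lra. lra. }
  assert (0 <= vnorm u / (vnorm u + 1)) by (apply Rdiv_le_0_compat; lra).
  nra.
Qed.

Lemma lift_velocity a b L K : lift_on y a b L K ->
  forall s, a < s < b -> y1 s = vscale (lift_rate y1 L s) (z1 (L s)).
Proof.
  intros HL s Hs. pose proof (lift_deriv a b L K HL s Hs) as D.
  destruct HL as (_ & HLz & _). pose proof reg as (_ & [Dzx Dzy] & _).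
  pose proof par as (_ & [Dyx Dyy] & _).
  assert (Nb : exists d, 0 < d /\ forall t, Rabs (t - s) < d -> z (L t) = y t).
  { destruct (open_interval_nbhd a b s Hs) as [d [Hd HI]]. exists d. split; auto. }
  assert (E1 : fst (y1 s) = fst (z1 (L s)) * lift_rate y1 L s).
  { eapply uniqueness_limite; [apply Dyx|].
    eapply (derivable_pt_lim_locally_ext (fun t => fst (z (L t)))).
    { destruct Nb as [d [Hd Hn]]. exists d. split; auto. intros t Ht. rewrite Hn; auto. }
    apply (derivable_pt_lim_comp' (fun u => fst (z u)) L); auto. }
  assert (E2 : snd (y1 s) = snd (z1 (L s)) * lift_rate y1 L s).
  { eapply uniqueness_limite; [apply Dyy|].
    eapply (derivable_pt_lim_locally_ext (fun t => snd (z (L t)))).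
    { destruct Nb as [d [Hd Hn]]. exists d. split; auto. intros t Ht. rewrite Hn; auto. }
    apply (derivable_pt_lim_comp' (fun u => snd (z u)) L); auto. }
  destruct (y1 s) as [p q]. simpl in E1, E2. unfold vscale. simpl. f_equal; lra.
Qed.

Lemma lift_rate_abs a b L K : lift_on y a b L K ->
  forall s, a < s < b -> Rabs (lift_rate y1 L s) * vnorm (z1 (L s)) = c.
Proof.
  intros HL s Hs. pose proof par as (_ & _ & Hc & _).
  rewrite <- (Hc s), (lift_velocity a b L K HL s Hs), vnorm_scale. reflexivity.
Qed.

Lemma lift_rate_sign a b L K : lift_on y a b L K ->
  forall s1 s2, a < s1 < b -> a < s2 < b -> 0 < lift_rate y1 L s1 -> 0 < lift_rate y1 L s2.
Proof.
  intros HL. apply (deriv_sign_constant L (lift_rate y1 L) a b).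
  intros s Hs. split; [apply (lift_deriv a b L K HL s Hs)|].
  intros E. pose proof (lift_rate_abs a b L K HL s Hs) as Hsp.
  rewrite E, Rabs_R0, Rmult_0_l in Hsp. destruct par as (_ & _ & _ & Hc & _). lra.
Qed.

Lemma lift_rate_formula a b L K : lift_on y a b L K -> a < b ->
  exists sg, (sg = 1 \/ sg = -1) /\
    forall s, a < s < b -> lift_rate y1 L s = sg * c / vnorm (z1 (L s)).
Proof.
  intros HL Hab. set (m := (a + b) / 2). assert (Hm : a < m < b) by (unfold m; lra).
  assert (Formula : forall sg s, (sg = 1 \/ sg = -1) -> a < s < b -> 0 <= sg * lift_rate y1 L s ->
            lift_rate y1 L s = sg * c / vnorm (z1 (L s))).
  { intros sg s Hsg Hs Hpos. pose proof (z1_vnorm_pos (L s)).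
    rewrite <- (lift_rate_abs a b L K HL s Hs).
    destruct Hsg as [E|E]; subst sg;
      [rewrite Rabs_right by lra|rewrite Rabs_left1 by lra]; field; lra. }
  destruct (Rlt_dec 0 (lift_rate y1 L m)) as [P|N].
  - exists 1. split; [auto|]. intros s Hs. apply Formula; auto.
    pose proof (lift_rate_sign a b L K HL m s Hm Hs P). lra.
  - exists (-1). split; [auto|]. intros s Hs. apply Formula; auto.
    destruct (Rle_dec (lift_rate y1 L s) 0); [lra|].
    pose proof (lift_rate_sign a b L K HL s m Hs Hm ltac:(lra)). lra.
Qed.

Lemma lift_accel a b L K : lift_on y a b L K -> a < b ->
  forall s0, a < s0 < b ->
  let w := vscale (c * c) (reparam_accel (z1 (L s0)) (z2 (L s0))) in
  derivable_pt_lim (fun t => fst (y1 t)) s0 (fst w) /\ derivable_pt_lim (fun t => snd (y1 t)) s0 (snd w).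
Proof.
  intros HL Hab s0 Hs0 w.
  destruct (lift_rate_formula a b L K HL Hab) as [sg [Hsg Hth]].
  pose proof reg as (_ & _ & [D1x D1y] & _).
  pose proof (lift_deriv a b L K HL s0 Hs0) as DL.
  set (px := fun t => fst (z1 (L t))). set (py := fun t => snd (z1 (L t))).
  assert (Dpx : derivable_pt_lim px s0 (fst (z2 (L s0)) * lift_rate y1 L s0))
    by (apply (derivable_pt_lim_comp' (fun u => fst (z1 u)) L); auto).
  assert (Dpy : derivable_pt_lim py s0 (snd (z2 (L s0)) * lift_rate y1 L s0))
    by (apply (derivable_pt_lim_comp' (fun u => snd (z1 u)) L); auto).
  assert (HQ : forall t, 0 < px t * px t + py t * py t) by (intros t; apply (z1_vnorm2_pos (L t))).
  destruct (open_interval_nbhd a b s0 Hs0) as [d [Hd Hnb]].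
  assert (Ey : forall t, a < t < b -> y1 t = vscale (sg * c / vnorm (z1 (L t))) (z1 (L t))).
  { intros t Ht. rewrite (lift_velocity a b L K HL t Ht), Hth; auto. }
  assert (Hth0 : lift_rate y1 L s0 = sg * c / sqrt (px s0 * px s0 + py s0 * py s0)) by (rewrite Hth; auto).
  pose proof (sqrt_lt_R0 _ (HQ s0)) as Hn. pose proof (sqrt_sqrt _ (Rlt_le _ _ (HQ s0))) as Hnn.
  assert (Hsg2 : c * c = (sg * c) * (sg * c)) by (destruct Hsg; subst; ring).
  unfold w, reparam_accel, vscale, vsub, dotp, vnorm2; simpl. rewrite Hsg2.
  split.
  - eapply (derivable_pt_lim_locally_ext (fun t => sg * c * (px t / sqrt (px t * px t + py t * py t)))).
    { exists d. split; auto. intros t Ht. rewrite (Ey t (Hnb t Ht)). unfold vscale, vnorm, vnorm2; simpl.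
      unfold px, py. field. apply Rgt_not_eq, sqrt_lt_R0, HQ. }
    eapply derivable_pt_lim_eq_value;
      [|apply derivable_pt_lim_mult'; [apply derivable_pt_lim_const|apply derivable_pt_lim_normalize; eauto]].
    rewrite Hth0. fold (px s0) (py s0). clear Hth0 Hth Ey.
    set (n := sqrt (px s0 * px s0 + py s0 * py s0)) in *. clearbody n. rewrite <- Hnn. field. lra.
  - eapply (derivable_pt_lim_locally_ext (fun t => sg * c * (py t / sqrt (py t * py t + px t * px t)))).
    { exists d. split; auto. intros t Ht. rewrite (Ey t (Hnb t Ht)). unfold vscale, vnorm, vnorm2; simpl.
      unfold px, py. rewrite (Rplus_comm (snd _ * _)). field. apply Rgt_not_eq, sqrt_lt_R0, HQ. }
    eapply derivable_pt_lim_eq_value;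
      [|apply derivable_pt_lim_mult'; [apply derivable_pt_lim_const|apply derivable_pt_lim_normalize; eauto]].
    2: { rewrite Rplus_comm. apply HQ. }
    rewrite Hth0. fold (px s0) (py s0). clear Hth0 Hth Ey.
    rewrite (Rplus_comm (py s0 * py s0)).
    set (n := sqrt (px s0 * px s0 + py s0 * py s0)) in *. clearbody n. rewrite <- Hnn. field. lra.
Qed.

Definition lift_window : R := PI / (8 * f * c).

Lemma lift_window_spec : 0 < lift_window /\ 2 * f * c * lift_window = PI / 4.
Proof.
  pose proof reg as (_ & _ & _ & _ & _ & Hf & _). pose proof par as (_ & _ & _ & Hc & _).
  pose proof PI_RGT_0. unfold lift_window. split; [apply Rdiv_lt_0_compat; nra|field; lra].
Qed.

Lemma chord_le_of_param_windows k s s' : 0 <= k -> Rabs (s - s') <= k * lift_window ->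
  f * vdist (y s) (y s') <= k * (PI / 4).
Proof.
  intros Hk H. pose proof reg as (_ & _ & _ & _ & _ & Hf & _).
  pose proof par as (_ & _ & _ & Hc & _).
  destruct lift_window_spec as [H0 H1]. pose proof (y_lipschitz s s').
  assert (2 * f * c * Rabs (s - s') <= 2 * f * c * (k * lift_window)) by (apply Rmult_le_compat_l; nra).
  eapply Rle_trans; [apply Rmult_le_compat_l; [lra|eauto]|]. nra.
Qed.

Lemma local_lift t0 :
  lift_on y (t0 - lift_window) (t0 + lift_window) (fun s => preimage_near z (y s) (preimage z (y t0)))
    (2 * f * c).
Proof.
  pose proof reg as (Pz & _ & _ & _ & _ & Hf & _). pose proof par as (_ & _ & _ & Hc & Hon).
  destruct lift_window_spec as [Hh0 Hh]. pose proof PI_RGT_0.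
  set (th0 := preimage z (y t0)). set (th := fun s => preimage_near z (y s) th0).
  assert (E0 : z th0 = y t0) by (apply preimage_spec; auto).
  assert (Eth : forall s, z (th s) = y s) by (intros s; apply preimage_near_spec; auto).
  assert (Hnear : forall s, t0 - lift_window < s < t0 + lift_window -> Rabs (th s - th0) <= PI / 4).
  { intros s Hs. pose proof (chord_le_of_param_windows 1 s t0 ltac:(lra) ltac:(apply Rabs_le; lra)).
    pose proof (param_gap_le_of_small (th s) th0) as Cl. rewrite Eth, E0 in Cl.
    assert (Rabs (th s - th0) <= PI) by apply (preimage_near_spec z (y s) th0 Pz (Hon s)). lra. }
  split; [nra|split; [intros s _; apply Eth|]].
  exists 1. split; [lra|]. intros s s' Hs Hs' _.
  pose proof (Hnear s Hs); pose proof (Hnear s' Hs').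
  assert (Rabs (th s - th s') <= PI / 2).
  { replace (th s - th s') with ((th s - th0) - (th s' - th0)) by ring.
    eapply Rle_trans; [apply Rabs_triang|]. rewrite Rabs_Ropp. lra. }
  pose proof (chord_le_of_param_windows 2 s s' ltac:(lra) ltac:(apply Rabs_le; lra)).
  pose proof (param_gap_le_of_small (th s) (th s')) as Cl. rewrite !Eth in Cl.
  eapply Rle_trans; [apply Cl; lra|].
  replace (2 * f * c * Rabs (s - s')) with (f * (2 * c * Rabs (s - s'))) by ring.
  apply Rmult_le_compat_l; [lra|apply y_lipschitz].
Qed.

Definition param_accel (t : R) : pt :=
  vscale (c * c) (reparam_accel (z1 (preimage z (y t))) (z2 (preimage z (y t)))).

Lemma Dc_param_velocity : Dc y1 param_accel.
Proof.
  pose proof reg as (Pz & _). pose proof par as (_ & _ & _ & _ & Hon).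
  destruct lift_window_spec as [Hh0 _].
  assert (Key : forall t0, vscale (c * c) (reparam_accel (z1 (preimage_near z (y t0) (preimage z (y t0))))
                     (z2 (preimage_near z (y t0) (preimage z (y t0))))) = param_accel t0).
  { intros t0. unfold param_accel.
    destruct (preimage_near_spec z (y t0) (preimage z (y t0)) Pz (Hon t0)) as [E1 _].
    assert (E2 : z (preimage_near z (y t0) (preimage z (y t0))) = z (preimage z (y t0)))
      by (rewrite E1, preimage_spec; auto).
    destruct (same_point_derivs _ _ E2) as [-> ->]. reflexivity. }
  split; intros t0; destruct (lift_accel _ _ _ _ (local_lift t0) ltac:(lra) t0 ltac:(lra)) as [D1 D2];
    rewrite Key in D1, D2; auto.
Qed.

Definition lifted_on (A0 B : R) (th : R -> R) : Prop :=
  (forall s, A0 <= s <= B -> z (th s) = y s) /\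
  (forall s s', A0 <= s <= B -> A0 <= s' <= B -> Rabs (s - s') <= lift_window ->
     Rabs (th s - th s') <= f * vdist (y s) (y s')).

(* Continue the lift past B by the preimage nearest to th B; any two lifted values that are at
   most 3 PI / 2 apart are then at most f times the chord apart. *)
Lemma lifted_on_extend A0 B th : A0 <= B -> lifted_on A0 B th ->
  lifted_on A0 (B + lift_window) (fun s => if Rle_dec s B then th s else preimage_near z (y s) (th B)).
Proof.
  intros HAB [H1 H2]. pose proof reg as (Pz & _ & _ & _ & _ & Hf & _).
  pose proof par as (_ & _ & _ & Hc & Hon).
  destruct lift_window_spec as [Hh0 Hh1]. pose proof PI_RGT_0.
  assert (EB : z (th B) = y B) by (apply H1; lra).
  set (nw := fun s => preimage_near z (y s) (th B)).
  assert (Hnew : forall s, B < s <= B + lift_window -> z (nw s) = y s /\ Rabs (nw s - th B) <= PI / 4).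
  { intros s Hs. destruct (preimage_near_spec z (y s) (th B) Pz (Hon s)) as [E1 E2]. split; auto.
    pose proof (param_gap_le_of_small (nw s) (th B)) as Cl. unfold nw in Cl |- *.
    rewrite E1, EB in Cl.
    pose proof (chord_le_of_param_windows 1 s B ltac:(lra) ltac:(apply Rabs_le; lra)). lra. }
  assert (Gen : forall a b s s', z a = y s -> z b = y s' -> Rabs (s - s') <= lift_window ->
             Rabs (a - b) <= 3 * PI / 2 ->
             Rabs (a - b) <= f * vdist (y s) (y s')).
  { intros a b s s' Ea Eb Hss Hab. pose proof (chord_le_of_param_windows 1 s s' ltac:(lra) ltac:(lra)).
    pose proof (param_gap_le_of_small a b) as Cl. rewrite Ea, Eb in Cl. apply Cl. lra. }
  assert (Old : forall s, A0 <= s <= B -> Rabs (s - B) <= lift_window -> Rabs (th s - th B) <= PI / 4).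
  { intros s Hs Hsb. pose proof (chord_le_of_param_windows 1 s B ltac:(lra) ltac:(lra)).
    pose proof (H2 s B Hs ltac:(lra) Hsb). lra. }
  assert (Tri : forall a b, Rabs (a - th B) <= PI / 4 -> Rabs (b - th B) <= PI / 4 ->
             Rabs (a - b) <= 3 * PI / 2).
  { intros a b Ha Hb. replace (a - b) with ((a - th B) - (b - th B)) by ring.
    eapply Rle_trans; [apply Rabs_triang|]. rewrite Rabs_Ropp. lra. }
  split.
  - intros s Hs. destruct (Rle_dec s B); [apply H1; lra|apply Hnew; lra].
  - intros s s' Hs Hs' Hss. apply Rabs_le_inv in Hss as Hss'.
    destruct (Rle_dec s B) as [Ls|Ls]; destruct (Rle_dec s' B) as [Ls'|Ls'].
    + apply H2; auto; lra.
    + destruct (Hnew s' ltac:(lra)) as [E' N'].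
      apply Gen; auto; [apply H1; lra|apply Tri; auto; apply Old; [lra|apply Rabs_le; lra]].
    + destruct (Hnew s ltac:(lra)) as [E N].
      apply Gen; auto; [apply H1; lra|apply Tri; auto; apply Old; [lra|apply Rabs_le; lra]].
    + destruct (Hnew s ltac:(lra)) as [E N]. destruct (Hnew s' ltac:(lra)) as [E' N'].
      apply Gen; auto.
Qed.

Lemma lifted_on_windows A0 (n : nat) : exists th, lifted_on A0 (A0 + INR n * lift_window) th.
Proof.
  pose proof par as (_ & _ & _ & _ & Hon). destruct lift_window_spec as [Hh0 _].
  induction n as [|n [th IH]].
  - exists (fun _ => preimage z (y A0)). simpl. split.
    + intros s Hs. replace s with A0 by lra. apply preimage_spec; auto.
    + intros s s' _ _ _. unfold Rminus. rewrite Rplus_opp_r, Rabs_R0.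
      pose proof reg as (_ & _ & _ & _ & _ & Hf & _). pose proof (vdist_nonneg (y s) (y s')). nra.
  - rewrite S_INR, Rmult_plus_distr_r, Rmult_1_l, <- Rplus_assoc.
    eexists. apply lifted_on_extend; [|exact IH].
    pose proof (pos_INR n). nra.
Qed.

Lemma global_lift : exists th : R -> R, lift_on y (- PI - 1) (PI + 1) th (2 * f * c).
Proof.
  pose proof reg as (_ & _ & _ & _ & _ & Hf & _). pose proof par as (_ & _ & _ & Hc & _).
  destruct lift_window_spec as [Hh0 _]. pose proof PI_RGT_0.
  destruct (archimed ((2 * PI + 2) / lift_window)) as [Ha _].
  assert (Hup : (0 <= up ((2 * PI + 2) / lift_window))%Z).
  { apply le_IZR. assert (0 < (2 * PI + 2) / lift_window) by (apply Rdiv_lt_0_compat; lra). simpl; lra. }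
  destruct (lifted_on_windows (- PI - 1) (Z.to_nat (up ((2 * PI + 2) / lift_window)))) as [th [H1 H2]].
  rewrite INR_IZR_INZ, Z2Nat.id in H1, H2 by auto.
  set (n := IZR (up ((2 * PI + 2) / lift_window))) in *.
  assert (Hn : PI + 1 <= - PI - 1 + n * lift_window).
  { apply (Rmult_lt_compat_r lift_window) in Ha; auto. unfold Rdiv in Ha.
    rewrite Rmult_assoc, Rinv_l, Rmult_1_r in Ha by lra. lra. }
  exists th. split; [nra|split; [intros s Hs; apply H1; lra|]].
  exists lift_window. split; auto. intros s s' Hs Hs' Hss.
  eapply Rle_trans; [apply H2; lra|].
  replace (2 * f * c * Rabs (s - s')) with (f * (2 * c * Rabs (s - s'))) by ring.
  apply Rmult_le_compat_l; [lra|apply y_lipschitz].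
Qed.

Section GlobalLift.
Variable th : R -> R.
Hypothesis lift : lift_on y (- PI - 1) (PI + 1) th (2 * f * c).

Lemma lift_continuous s : - PI <= s <= PI -> continuity_pt th s.
Proof.
  intros Hs. pose proof PI_RGT_0. apply derivable_continuous_pt. exists (lift_rate y1 th s).
  apply (lift_deriv _ _ _ _ lift). lra.
Qed.

Lemma lift_mvt s s' : - PI <= s -> s < s' -> s' <= PI ->
  exists xi, s < xi < s' /\ th s' - th s = lift_rate y1 th xi * (s' - s).
Proof.
  intros H1 H2 H3. pose proof PI_RGT_0.
  destruct (MVT_cor2 th (lift_rate y1 th) s s' H2) as [xi [E Hxi]].
  - intros t Ht. apply (lift_deriv _ _ _ _ lift). lra.
  - exists xi. auto.
Qed.

Hypothesis y_inj : forall s t, - PI <= s < PI -> - PI <= t < PI -> y s = y t -> s = t.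

(* Otherwise the lift passes th (-PI) + 2 PI sg strictly inside (-PI, PI), and y is not injective. *)
Lemma lift_winds_once sg (k : Z) : (sg = 1 \/ sg = -1) -> 0 < sg * IZR k ->
  th PI = th (- PI) + 2 * PI * IZR k -> sg * IZR k = 1.
Proof.
  intros Hsg Hk0 Hk. pose proof PI_RGT_0. pose proof par as (Py & _).
  destruct lift as (_ & HLz & _).
  assert (Hk2 : sg * IZR k < 2).
  { apply Rnot_le_lt. intros Hge.
    set (g := fun s => sg * (th s - th (- PI)) - 2 * PI).
    assert (Hg2 : 0 < g PI).
    { unfold g. rewrite Hk.
      replace (sg * (th (- PI) + 2 * PI * IZR k - th (- PI))) with (2 * PI * (sg * IZR k))
        by ring. nra. }
    destruct (Ranalysis5.IVT_interv g (- PI) PI) as [s [Hs Hgs]]; [|lra|unfold g; lra|auto|].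
    { intros a Ha. unfold g. apply continuity_pt_minus'; [|apply continuity_pt_const'].
      apply continuity_pt_mult'; [apply continuity_pt_const'|].
      apply continuity_pt_minus'; [apply lift_continuous; auto|apply continuity_pt_const']. }
    assert (Es : th s = th (- PI) + 2 * PI * IZR (if Req_EM_T sg 1 then 1 else -1)).
    { unfold g in Hgs. destruct (Req_EM_T sg 1) as [E|NE]; [subst sg; simpl; lra|].
      destruct Hsg as [|E]; [contradiction|]. subst sg. simpl. lra. }
    assert (Ys : y s = y (- PI)) by (rewrite <- !HLz by lra; rewrite Es; apply periodic_Z; apply reg).
    assert (s <> PI).
    { intros ->. unfold g in Hgs. rewrite Hk in Hgs. nra. }
    assert (s = - PI) by (apply y_inj; auto; lra).
    subst s. unfold g in Hgs. lra. }
  destruct Hsg as [E|E]; subst sg.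
  - rewrite Rmult_1_l in *. assert (k = 1%Z) by (apply lt_IZR in Hk0; apply lt_IZR in Hk2; lia).
    subst k. simpl. ring.
  - assert (k = (-1)%Z).
    { assert (IZR k < 0) by lra. assert (-2 < IZR k) by lra. apply lt_IZR in H0. apply lt_IZR in H1. lia. }
    subst k. simpl. ring.
Qed.

Lemma lift_degree : exists sg, (sg = 1 \/ sg = -1) /\
  (forall s, - PI - 1 < s < PI + 1 -> lift_rate y1 th s = sg * c / vnorm (z1 (th s))) /\
  sg * (th PI - th (- PI)) = 2 * PI /\ / f <= c /\ c <= speed_bound S.
Proof.
  pose proof PI_RGT_0. pose proof par as (Py & _ & _ & Hc & _). pose proof lift as (_ & HLz & _).
  destruct (lift_rate_formula _ _ _ _ lift ltac:(lra)) as [sg [Hsg Hth]].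
  exists sg. split; [auto|split; [auto|]].
  assert (Ep : z (th PI) = z (th (- PI))).
  { rewrite !HLz by lra. replace PI with (- PI + 2 * PI) at 1 by ring. apply Py. }
  destruct (same_point_period _ _ Ep) as [k Hk].
  destruct (lift_mvt (- PI) PI ltac:(lra) ltac:(lra) ltac:(lra)) as [xi [Hxi Exi]].
  rewrite Hth in Exi by lra.
  set (nx := vnorm (z1 (th xi))) in *. assert (Hnx : 0 < nx) by apply z1_vnorm_pos.
  assert (Ek : sg * c / nx = IZR k) by (apply (Rmult_eq_reg_r (2 * PI)); lra).
  assert (Hpos : 0 < sg * IZR k).
  { rewrite <- Ek. replace (sg * (sg * c / nx)) with ((sg * sg) * (c / nx)) by (field; lra).
    assert (0 < c / nx) by (apply Rdiv_lt_0_compat; lra). destruct Hsg; subst sg; lra. }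
  pose proof (lift_winds_once sg k Hsg Hpos Hk) as Hone.
  assert (Ec : c = nx).
  { assert (Hsg2 : sg * sg = 1) by (destruct Hsg; subst; ring).
    assert (E1 : c / nx = sg * (sg * c / nx)).
    { replace (sg * (sg * c / nx)) with (sg * sg * (c / nx)) by (field; lra). rewrite Hsg2. ring. }
    rewrite Ek, Hone in E1. apply (Rmult_eq_reg_r (/ nx)); [|apply Rinv_neq_0_compat; lra].
    rewrite Rinv_r by lra. exact E1. }
  split; [rewrite Hk; replace (th (- PI) + 2 * PI * IZR k - th (- PI)) with (2 * PI * IZR k) by ring; nra|].
  rewrite Ec. split; [apply speed_lower|apply z1_bound].
Qed.

Section Oriented.
Variable sg : R.
Hypotheses (sg_sign : sg = 1 \/ sg = -1)
  (rate_eq : forall s, - PI - 1 < s < PI + 1 -> lift_rate y1 th s = sg * c / vnorm (z1 (th s)))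
  (winding : sg * (th PI - th (- PI)) = 2 * PI).

Lemma lift_monotone_bounds s s' : - PI <= s -> s <= s' -> s' <= PI ->
  c / speed_bound S * (s' - s) <= sg * (th s' - th s) <= c * f * (s' - s).
Proof.
  intros H1 H2 H3. pose proof par as (_ & _ & _ & Hc & _).
  pose proof reg as (_ & _ & _ & _ & _ & Hf & _).
  destruct (Req_dec s s') as [<-|NE]; [unfold Rminus; rewrite !Rplus_opp_r; lra|].
  destruct (lift_mvt s s' H1 ltac:(lra) H3) as [xi [Hxi ->]].
  rewrite rate_eq by (pose proof PI_RGT_0; lra).
  set (n := vnorm (z1 (th xi))).
  assert (Hn1 : / f <= n) by apply speed_lower.
  assert (Hn2 : n <= speed_bound S) by apply z1_bound.
  assert (0 < / f) by (apply Rinv_0_lt_compat; lra).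
  replace (sg * (sg * c / n * (s' - s))) with ((sg * sg) * (c / n) * (s' - s)) by (field; lra).
  replace (sg * sg) with 1 by (destruct sg_sign; subst; ring). rewrite Rmult_1_l.
  split; apply Rmult_le_compat_r; try lra; unfold Rdiv; apply Rmult_le_compat_l; try lra.
  - apply Rinv_le_contravar; lra.
  - rewrite <- (Rinv_inv f). apply Rinv_le_contravar; lra.
Qed.

Lemma lift_strict_monotone s s' : - PI <= s -> s < s' -> s' <= PI -> 0 < sg * (th s' - th s).
Proof.
  intros H1 H2 H3. pose proof par as (_ & _ & _ & Hc & _).
  destruct (lift_monotone_bounds s s' H1 ltac:(lra) H3) as [A _].
  assert (0 < c / speed_bound S * (s' - s))
    by (apply Rmult_lt_0_compat; [apply Rdiv_lt_0_compat, speed_bound_pos|]; lra).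
  lra.
Qed.

(* The lift moves by D = sg (th hi - th lo) between lo and hi and by 2 PI - D along the rest of
   the period, and each is at least c / speed_bound S times the corresponding parameter length. *)
Lemma chord_lower_ordered lo hi : - PI <= lo -> lo <= hi -> hi <= PI ->
  c / speed_bound S * Rmin (hi - lo) (2 * PI - (hi - lo)) <= f * vdist (y hi) (y lo).
Proof.
  intros H1 H2 H3. pose proof PI_RGT_0. pose proof lift as (_ & HLz & _).
  pose proof par as (_ & _ & _ & Hc & _).
  assert (Hcm : 0 < c / speed_bound S) by (apply Rdiv_lt_0_compat; [|apply speed_bound_pos]; lra).
  destruct (lift_monotone_bounds lo hi H1 H2 H3) as [A1 _].
  destruct (lift_monotone_bounds hi PI ltac:(lra) H3 ltac:(lra)) as [A2 _].
  destruct (lift_monotone_bounds (- PI) lo ltac:(lra) H1 ltac:(lra)) as [A3 _].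
  set (D := sg * (th hi - th lo)).
  assert (HD' : c / speed_bound S * (2 * PI - (hi - lo)) <= 2 * PI - D)
    by (unfold D; rewrite <- winding; nra).
  destruct (param_gap_mod_le (th hi) (th lo)) as [k [_ Hk]].
  rewrite !HLz in Hk by lra.
  assert (0 <= c / speed_bound S * (hi - lo)) by (apply Rmult_le_pos; lra).
  assert (0 <= c / speed_bound S * (2 * PI - (hi - lo))) by (apply Rmult_le_pos; lra).
  assert (HD : 0 <= D <= 2 * PI) by (unfold D in *; lra).
  assert (Hx : th hi - th lo = D \/ th hi - th lo = - D)
    by (unfold D; destruct sg_sign; subst sg; [left|right]; ring).
  pose proof (Rmin_le_dist_period (th hi - th lo) D k HD Hx) as CL.
  eapply Rle_trans; [|apply Hk]. eapply Rle_trans; [|apply CL].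
  apply Rmin_glb.
  - eapply Rle_trans; [|apply A1]. apply Rmult_le_compat_l; [lra|apply Rmin_l].
  - eapply Rle_trans; [|apply HD']. apply Rmult_le_compat_l; [lra|apply Rmin_r].
Qed.

Lemma chord_lower xi eta : inT xi -> inT eta ->
  c / speed_bound S * Rabs eta <= f * vdist (y xi) (y (xi - eta)).
Proof.
  intros Hxi Heta. pose proof PI_RGT_0. pose proof par as (Py & _ & _ & Hc & _). unfold inT in *.
  assert (Hcm : 0 < c / speed_bound S) by (apply Rdiv_lt_0_compat; [|apply speed_bound_pos]; lra).
  assert (Gen : forall s1 s2, - PI <= s1 <= PI -> - PI <= s2 <= PI ->
     Rabs eta <= Rmin (Rabs (s1 - s2)) (2 * PI - Rabs (s1 - s2)) ->
     c / speed_bound S * Rabs eta <= f * vdist (y s1) (y s2)).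
  { intros s1 s2 Hs1 Hs2 Hm.
    destruct (Rle_dec s2 s1) as [Le|Lt].
    - rewrite (Rabs_right (s1 - s2)) in Hm by lra.
      eapply Rle_trans; [|apply (chord_lower_ordered s2 s1); lra]. apply Rmult_le_compat_l; lra.
    - rewrite (Rabs_left (s1 - s2)) in Hm by lra. rewrite vdist_sym.
      eapply Rle_trans; [|apply (chord_lower_ordered s1 s2); lra]. apply Rmult_le_compat_l; [lra|].
      replace (s2 - s1) with (- (s1 - s2)) by ring. auto. }
  destruct (Rle_dec (- PI) (xi - eta)) as [Lo|Lo]; [destruct (Rle_dec (xi - eta) PI) as [Hi|Hi]|].
  - apply Gen; try lra. replace (xi - (xi - eta)) with eta by ring.
    assert (Rabs eta <= PI) by (apply Rabs_le; lra). apply Rmin_glb; lra.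
  - replace (y (xi - eta)) with (y (xi - eta - 2 * PI)).
    2: { replace (xi - eta) with (xi - eta - 2 * PI + 2 * PI) at 2 by ring. rewrite Py. auto. }
    apply Gen; try lra. replace (xi - (xi - eta - 2 * PI)) with (eta + 2 * PI) by ring.
    rewrite (Rabs_left eta), Rabs_right by lra. apply Rmin_glb; lra.
  - replace (y (xi - eta)) with (y (xi - eta + 2 * PI)) by apply Py.
    apply Gen; try lra. replace (xi - (xi - eta + 2 * PI)) with (eta - 2 * PI) by ring.
    rewrite (Rabs_right eta), Rabs_left by lra. apply Rmin_glb; lra.
Qed.

Lemma param_accel_lift s : - PI <= s <= PI ->
  param_accel s = vscale (c * c) (reparam_accel (z1 (th s)) (z2 (th s))).
Proof.
  intros Hs. pose proof lift as (_ & HLz & _). pose proof par as (_ & _ & _ & _ & Hon).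
  pose proof PI_RGT_0.
  assert (E : z (preimage z (y s)) = z (th s)) by (rewrite preimage_spec, HLz by (auto; lra); auto).
  unfold param_accel. destruct (same_point_derivs _ _ E) as [-> ->]. auto.
Qed.

(* The chord of y'' over [a, b] is controlled by the chords of z' and z'' over [th a, th b]
   (reparam_accel_diff_sq); the z' part is Lipschitz, hence linear in the length th b - th a. *)
Lemma riesz_quot_param_accel a b : - PI <= a -> a < b -> b <= PI ->
  riesz_quot param_accel a b <=
    (2 * c ^ 5 * f ^ 5) * riesz_quot_abs z2 (th a) (th b) +
    (20000 * c ^ 5 * f ^ 7 * accel_bound S ^ 4) * (sg * (th b - th a)).
Proof.
  intros Ha Hab Hb. pose proof par as (_ & _ & _ & Hc & _).
  pose proof reg as (_ & _ & _ & _ & _ & Hf & _). pose proof PI_RGT_0.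
  destruct (lift_monotone_bounds a b Ha ltac:(lra) Hb) as [_ Mo].
  pose proof (lift_strict_monotone a b Ha Hab Hb) as Hdt.
  assert (Hadt : Rabs (th b - th a) = sg * (th b - th a)).
  { destruct sg_sign as [E|E]; rewrite E in *; [rewrite Rabs_right|rewrite Rabs_left]; lra. }
  assert (Hsq : (th b - th a) * (th b - th a) = (sg * (th b - th a)) * (sg * (th b - th a)))
    by (destruct sg_sign; subst; ring).
  unfold riesz_quot, riesz_quot_abs. rewrite !param_accel_lift, vsub_scale, vnorm2_scale, Hadt by lra.
  pose proof (reparam_accel_chord_sq (th a) (th b)) as GD. rewrite Hsq in GD.
  replace (20000 * c ^ 5 * f ^ 7 * accel_bound S ^ 4) with (c ^ 5 * f * (20000 * accel_bound S ^ 4 * f ^ 6))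
    by ring.
  apply riesz_quot_rescale; try lra.
  - pose proof (accel_bound_nonneg S). apply Rmult_le_pos; [|apply pow_le]; try lra.
    apply Rmult_le_pos; [lra|apply pow_le; auto].
  - split; [apply vnorm2_nonneg|auto].
Qed.

Lemma rsum_param_accel_le l : partition l ->
  rsum param_accel (- PI) l <=
    (2 * c ^ 5 * f ^ 5) * (2 * S) + (20000 * c ^ 5 * f ^ 7 * accel_bound S ^ 4) * (2 * PI).
Proof.
  intros [Hnil [Hl Hlast]]. pose proof par as (_ & _ & _ & Hc & _).
  pose proof reg as (_ & _ & _ & HS0 & _ & Hf & _).
  pose proof PI_RGT_0.
  rewrite (last_default l 0 (- PI) Hnil) in Hlast.
  rewrite rsum_chain_sum.
  set (C1 := 2 * c ^ 5 * f ^ 5). set (C2 := 20000 * c ^ 5 * f ^ 7 * accel_bound S ^ 4).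
  eapply Rle_trans.
  { apply (chain_sum_le _ (fun x x' => C1 * riesz_quot_abs z2 (th x) (th x') + C2 * (sg * th x' - sg * th x))
      (- PI) PI); [|lra|auto|lra].
    intros x x' H1 H2 H3. replace (sg * th x' - sg * th x) with (sg * (th x' - th x)) by ring.
    apply riesz_quot_param_accel; auto. }
  rewrite chain_sum_lin, (chain_sum_telescope (fun x => sg * th x)), Hlast.
  rewrite <- (chain_sum_map (riesz_quot_abs z2) th).
  assert (Sp : chain_sum (riesz_quot_abs z2) (th (- PI)) (map th l) <= 2 * S).
  { apply chain_sum_abs_period_window.
    pose proof (last_map th (- PI) l) as LM. rewrite Hlast in LM.
    assert (Mono : forall x x', - PI <= x -> x < x' -> x' <= PI -> 0 < sg * (th x' - th x))
      by exact lift_strict_monotone.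
    destruct sg_sign as [E|E]; rewrite E in *; [left|right]; split; rewrite ?LM; try lra.
    - apply (map_incr th (- PI) PI); auto; try lra. intros x x' H1 H2 H3.
      pose proof (Mono x x' H1 H2 H3). lra.
    - apply (map_decr th (- PI) PI); auto; try lra. intros x x' H1 H2 H3.
      pose proof (Mono x x' H1 H2 H3). lra. }
  assert (0 <= C1) by (unfold C1; repeat apply Rmult_le_pos; try lra; apply pow_le; lra).
  replace (sg * th PI - sg * th (- PI)) with (2 * PI) by lra.
  apply Rplus_le_compat_r. apply Rmult_le_compat_l; auto.
Qed.

End Oriented.

End GlobalLift.

End Lift.

Lemma param_estimates y : const_speed_param (curve_interior z) y ->
  exists y1 y2 Sy, Dc y y1 /\ Dc y1 y2 /\ (forall l, partition l -> rsum y2 (- PI) l <= Sy) /\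
    Sy <= riesz_const * (sqrt S ^ 7 * f ^ 5 + sqrt S ^ 9 * f ^ 7) /\
    (forall t, on_curve z (y t)) /\
    (forall xi eta, inT xi -> inT eta -> eta <> 0 ->
       y xi <> y (xi - eta) /\ Rabs eta / vdist (y xi) (y (xi - eta)) <= 48 * f * f * sqrt S).
Proof.
  intros (Py & Hinj & Hbd & y1 & Dy & [c Hc] & _).
  pose proof reg as (_ & _ & _ & HS0 & _ & Hf & _).
  assert (Hon : forall t, on_curve z (y t)) by (intros t; apply boundary_on_curve, Hbd; exists t; auto).
  pose proof (const_speed_pos y y1 c Hinj Dy Hc) as Hc0.
  assert (par : speed_param_on y y1 c) by (unfold speed_param_on; tauto).
  destruct (global_lift y y1 c par) as [th HL].
  destruct (lift_degree y y1 c par th HL Hinj) as [sg (Hsg & Hrate & Hwind & Hc1 & Hc2)].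
  exists y1, (param_accel y c), ((2 * c ^ 5 * f ^ 5) * (2 * S) +
    (20000 * c ^ 5 * f ^ 7 * accel_bound S ^ 4) * (2 * PI)).
  split; [auto|split; [apply (Dc_param_velocity y y1 c par)|split]].
  { apply (rsum_param_accel_le y y1 c par th HL sg Hsg Hrate Hwind). }
  split; [apply param_riesz_bound_le; auto; lra|].
  split; [auto|].
  intros xi eta Hxi Heta Hne.
  pose proof (chord_lower y y1 c par th HL sg Hsg Hrate Hwind xi eta Hxi Heta) as Sep.
  destruct (arc_chord_of_chord_lower c f (speed_bound S) (sqrt S) eta (vdist (y xi) (y (xi - eta))))
    as [Hd Hq]; auto.
  - split; [apply speed_bound_pos|apply speed_bound_le; auto].
  - split; auto. intros E. rewrite E, vdist_self in Hd. lra.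
Qed.

End RegularCurve.

(** * Norms of the new parametrizations *)

Lemma partition_PI : partition (PI :: nil).
Proof.
  pose proof PI_RGT_0. split; [discriminate|split; [simpl; split; [lra|auto]|reflexivity]].
Qed.

Lemma rsum_lub_nonneg g S : is_lub (fun r => exists l, partition l /\ r = rsum g (- PI) l) S -> 0 <= S.
Proof.
  intros [HS _]. pose proof PI_RGT_0.
  eapply Rle_trans; [|apply HS; exists (PI :: nil); split; [apply partition_PI|reflexivity]].
  apply rsum_nonneg. simpl. split; [lra|auto].
Qed.

Lemma regular_of_norms N Z f k b : (k < N)%nat -> periodic (Z k) -> L2third (Z k) b -> FVal N Z f ->
  exists z1 z2 S, regular_curve (Z k) z1 z2 S f /\ b = sqrt S.
Proof.
  intros Hk Pz (z1 & z2 & D1 & D2 & S & HS & Eb) [Hinj [HF1 _]].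
  exists z1, z2, S. split; auto.
  split; [auto|split; [auto|split; [auto|split; [|split; [|split]]]]].
  - apply (rsum_lub_nonneg z2 S HS).
  - intros l Hl. apply HS. exists l; auto.
  - apply HF1. left; auto.
  - intros xi eta Hxi Heta Hne. split; [apply Hinj; auto|].
    apply HF1. right. exists k, xi, eta. tauto.
Qed.

Lemma Linf_on_curve z a y : periodic z -> Linf z a -> (forall t, on_curve z (y t)) ->
  exists aY, Linf y aY /\ 0 <= aY <= a.
Proof.
  intros Pz [Ha1 Ha2] Hon.
  assert (Bound : forall t, vnorm (y t) <= a).
  { intros t. destruct (Hon t) as [t0 <-]. destruct (periodic_reduce z Pz t0) as [t1 [Ht1 ->]].
    apply Ha1. exists t1. split; auto. unfold inT; lra. }
  destruct (exists_is_lub (fun r => exists t, inT t /\ r = vnorm (y t))) as [aY [HA1 HA2]].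
  { exists (vnorm (y 0)). exists 0. pose proof PI_RGT_0. split; auto. unfold inT; lra. }
  { exists a. intros x [t [_ ->]]. auto. }
  exists aY. split; [split; auto|split].
  - eapply Rle_trans; [apply (vnorm_nonneg (y 0))|]. apply HA1. exists 0. pose proof PI_RGT_0.
    split; auto. unfold inT; lra.
  - apply HA2. intros x [t [_ ->]]. auto.
Qed.

Lemma L2third_of_rsum_bound y y1 y2 Sy : Dc y y1 -> Dc y1 y2 ->
  (forall l, partition l -> rsum y2 (- PI) l <= Sy) ->
  exists b, L2third y b /\ 0 <= b /\ b * b <= Sy.
Proof.
  intros D1 D2 HR.
  destruct (exists_is_lub (fun r => exists l, partition l /\ r = rsum y2 (- PI) l)) as [SY HY].
  { exists (rsum y2 (- PI) (PI :: nil)). exists (PI :: nil). split; auto. apply partition_PI. }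
  { exists Sy. intros x [l [Hl ->]]. auto. }
  pose proof (rsum_lub_nonneg y2 SY HY) as HSY0.
  assert (HSYb : SY <= Sy) by (apply HY; intros x [l [Hl ->]]; auto).
  exists (sqrt SY). split; [exists y1, y2; split; [|split; [|exists SY]]; auto|].
  split; [apply sqrt_pos|]. rewrite sqrt_sqrt; auto.
Qed.

Definition param_bounds (zk y : curve) (f a b aY bY : R) : Prop :=
  Linf y aY /\ L2third y bY /\ 0 <= aY <= a /\ 0 <= bY /\
  bY * bY <= riesz_const * (b ^ 7 * f ^ 5 + b ^ 9 * f ^ 7) /\
  (forall t, on_curve zk (y t)) /\
  (forall xi eta, inT xi -> inT eta -> eta <> 0 ->
     y xi <> y (xi - eta) /\ Rabs eta / vdist (y xi) (y (xi - eta)) <= 48 * f * f * b).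

Lemma param_norms N Z f k a b y : (k < N)%nat -> periodic (Z k) -> Linf (Z k) a -> L2third (Z k) b ->
  FVal N Z f -> const_speed_param (curve_interior (Z k)) y ->
  exists aY bY, param_bounds (Z k) y f a b aY bY.
Proof.
  intros Hk Pz Ha Hb HF Hy.
  destruct (regular_of_norms N Z f k b Hk Pz Hb HF) as (z1 & z2 & S & G & ->).
  destruct (param_estimates _ _ _ _ _ G y Hy) as (y1 & y2 & Sy & Dy1 & Dy2 & HR & HSy & Hon & HFy).
  destruct (Linf_on_curve (Z k) a y Pz Ha Hon) as (aY & HaY & HaY').
  destruct (L2third_of_rsum_bound y y1 y2 Sy Dy1 Dy2 HR) as (bY & HbY & HbY0 & HbY').
  exists aY, bY. do 4 (split; [auto|]). split; [lra|auto].
Qed.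

Lemma sqrt_sumN_ge_term N (a b : nat -> R) k : (k < N)%nat ->
  (forall j, (j < N)%nat -> 0 <= b j) ->
  b k <= sqrt (sumN N (fun j => a j * a j + b j * b j)).
Proof.
  intros Hk Hb.
  rewrite <- (Rabs_right (b k)) by (apply Rle_ge, Hb; auto).
  rewrite <- sqrt_Rsqr_abs. apply sqrt_le_1_alt. unfold Rsqr.
  pose proof (le_sumN N (fun j => a j * a j + b j * b j) k ltac:(intros; nra) Hk). simpl in *. nra.
Qed.

Lemma H3_term_bound a b aY bY f h : 0 <= b <= h -> 0 <= aY <= a -> 0 <= f ->
  bY * bY <= riesz_const * (b ^ 7 * f ^ 5 + b ^ 9 * f ^ 7) ->
  aY * aY + bY * bY <= (1 + riesz_const * (h ^ 5 * f ^ 5 + h ^ 7 * f ^ 7)) * (a * a + b * b).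
Proof.
  intros Hb Ha Hf HbY.
  assert (HK : 0 <= riesz_const) by (unfold riesz_const; lra).
  assert (E7 : b ^ 7 * f ^ 5 <= h ^ 5 * f ^ 5 * (b * b)).
  { replace (b ^ 7 * f ^ 5) with (b ^ 5 * f ^ 5 * (b * b)) by ring.
    apply Rmult_le_compat_r; [nra|].
    apply Rmult_le_compat_r; [apply pow_le; lra|apply pow_incr; lra]. }
  assert (E9 : b ^ 9 * f ^ 7 <= h ^ 7 * f ^ 7 * (b * b)).
  { replace (b ^ 9 * f ^ 7) with (b ^ 7 * f ^ 7 * (b * b)) by ring.
    apply Rmult_le_compat_r; [nra|].
    apply Rmult_le_compat_r; [apply pow_le; lra|apply pow_incr; lra]. }
  assert (0 <= h ^ 5 * f ^ 5 + h ^ 7 * f ^ 7)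
    by (apply Rplus_le_le_0_compat; apply Rmult_le_pos; apply pow_le; lra).
  assert (riesz_const * (b ^ 7 * f ^ 5 + b ^ 9 * f ^ 7) <=
          riesz_const * (h ^ 5 * f ^ 5 + h ^ 7 * f ^ 7) * (b * b))
    by (rewrite Rmult_assoc; apply Rmult_le_compat_l; lra).
  assert (0 <= riesz_const * (h ^ 5 * f ^ 5 + h ^ 7 * f ^ 7)) by (apply Rmult_le_pos; auto).
  nra.
Qed.

Lemma H3_factor_bound h f w : 0 <= h <= w -> 0 <= f <= w -> 1 <= w ->
  (1 + riesz_const * (h ^ 5 * f ^ 5 + h ^ 7 * f ^ 7)) * (h * h) <= (1 + 2 * riesz_const) * (w ^ 8 * w ^ 8).
Proof.
  intros Hh Hf Hw.
  assert (HK : 0 <= riesz_const) by (unfold riesz_const; lra).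
  assert (P : forall n, h ^ n * f ^ n <= w ^ n * w ^ n).
  { intros n. apply Rmult_le_compat; try apply pow_le; try apply pow_incr; lra. }
  assert (W : forall n, (n <= 14)%nat -> 1 <= w ^ n <= w ^ 14).
  { intros n Hn. split; [rewrite <- (pow1 n); apply pow_incr; lra|apply Rle_pow; auto]. }
  assert (h ^ 5 * f ^ 5 <= w ^ 14).
  { replace (w ^ 14) with (w ^ 5 * w ^ 5 * w ^ 4) by ring.
    pose proof (P 5%nat). destruct (W 4%nat ltac:(lia)). pose proof (pow_le w 5 ltac:(lra)). nra. }
  assert (h ^ 7 * f ^ 7 <= w ^ 14) by (replace (w ^ 14) with (w ^ 7 * w ^ 7) by ring; apply P).
  destruct (W 14%nat ltac:(lia)).
  assert (1 + riesz_const * (h ^ 5 * f ^ 5 + h ^ 7 * f ^ 7) <= (1 + 2 * riesz_const) * w ^ 14) by nra.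
  assert (h * h <= w * w) by nra.
  replace (w ^ 8 * w ^ 8) with (w ^ 14 * (w * w)) by ring.
  assert (0 <= h ^ 5 * f ^ 5 + h ^ 7 * f ^ 7)
    by (apply Rplus_le_le_0_compat; apply Rmult_le_pos; apply pow_le; lra).
  apply Rle_trans with ((1 + 2 * riesz_const) * w ^ 14 * (h * h)); [apply Rmult_le_compat_r; nra|].
  replace ((1 + 2 * riesz_const) * (w ^ 14 * (w * w))) with ((1 + 2 * riesz_const) * w ^ 14 * (w * w))
    by ring.
  apply Rmult_le_compat_l; nra.
Qed.

Lemma H3norm_bound N (a b aY bY : nat -> R) f h w :
  (forall k, (k < N)%nat -> 0 <= b k /\ 0 <= aY k <= a k /\
     bY k * bY k <= riesz_const * (b k ^ 7 * f ^ 5 + b k ^ 9 * f ^ 7)) ->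
  h = sqrt (sumN N (fun k => a k * a k + b k * b k)) -> 0 <= f <= w -> h <= w -> 1 <= w ->
  sqrt (sumN N (fun k => aY k * aY k + bY k * bY k)) <= (1 + 2 * riesz_const) * w ^ 8.
Proof.
  intros Hk Eh Hf Hhw Hw.
  assert (Hb0 : forall k, (k < N)%nat -> 0 <= b k) by (intros k Hkn; apply Hk; auto).
  assert (Hsum0 : 0 <= sumN N (fun k => a k * a k + b k * b k)) by (apply sumN_nonneg; intros k Hkn; nra).
  assert (Hh0 : 0 <= h) by (rewrite Eh; apply sqrt_pos).
  assert (Hhh : h * h = sumN N (fun k => a k * a k + b k * b k)) by (rewrite Eh; apply sqrt_sqrt; auto).
  apply Rle_sqrt_scale; [apply sumN_nonneg; intros; nra|unfold riesz_const; lra|apply pow_le; lra|].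
  eapply Rle_trans; [|apply (H3_factor_bound h f w); lra].
  rewrite Hhh, <- sumN_scal. apply sumN_le. intros k Hkn.
  destruct (Hk k Hkn) as (Hb & Ha & HbY).
  apply H3_term_bound; auto; [split; auto; rewrite Eh; apply sqrt_sumN_ge_term; auto|lra].
Qed.

Lemma deltaVal_of_on_curves N Z Y d : (forall k, (k < N)%nat -> periodic (Z k)) ->
  (forall k t, (k < N)%nat -> on_curve (Z k) (Y k t)) -> deltaVal N Z d ->
  exists dY, deltaVal N Y dY /\ d <= dY.
Proof.
  intros Pz Hon [[N1 ->]|[N2 [mZ [[HmZ1 HmZ2] ->]]]].
  - exists 1. split; [left; auto|lra].
  - destruct (exists_is_glb (fun r => exists i k xi eta, (i < N)%nat /\ (k < N)%nat /\ i <> k /\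
                  inT xi /\ inT eta /\ r = vdist (Y i xi) (Y k eta))) as [mY [HmY1 HmY2]].
    { exists (vdist (Y 0%nat 0) (Y 1%nat 0)). exists 0%nat, 1%nat, 0, 0. pose proof PI_RGT_0.
      unfold inT. repeat split; try lia; lra. }
    { exists 0. intros x (i & k & xi & eta & _ & _ & _ & _ & _ & ->). apply vdist_nonneg. }
    exists (Rmin mY 1). split; [right; split; [lia|exists mY; split; [split; auto|auto]]|].
    apply Rle_min_compat_r. apply HmY2.
    intros r (i & k & xi & eta & Hi & Hk & Hik & Hxi & Heta & ->).
    destruct (Hon i xi Hi) as [t0 <-].
    destruct (periodic_reduce (Z i) (Pz i Hi) t0) as [t1 [Ht1 ->]].
    destruct (Hon k eta Hk) as [s0 <-].
    destruct (periodic_reduce (Z k) (Pz k Hk) s0) as [s1 [Hs1 ->]].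
    apply HmZ1. exists i, k, t1, s1. unfold inT. repeat split; auto; lra.
Qed.

Lemma FVal_of_bound N Y B : 0 <= B ->
  (forall k xi eta, (k < N)%nat -> inT xi -> inT eta -> eta <> 0 ->
     Y k xi <> Y k (xi - eta) /\ Rabs eta / vdist (Y k xi) (Y k (xi - eta)) <= B) ->
  exists fY, FVal N Y fY /\ fY <= 1 + B.
Proof.
  intros HB HY.
  assert (Bound : forall x, (x = 1 \/ exists k xi eta, (k < N)%nat /\ inT xi /\ inT eta /\ eta <> 0 /\
                 x = Rabs eta / vdist (Y k xi) (Y k (xi - eta))) -> x <= 1 + B).
  { intros x [->|(k & xi & eta & Hk & Hxi & Heta & Hne & ->)]; [lra|].
    pose proof (proj2 (HY k xi eta Hk Hxi Heta Hne)). lra. }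
  destruct (exists_is_lub (fun r => r = 1 \/ exists k xi eta, (k < N)%nat /\ inT xi /\ inT eta /\
              eta <> 0 /\ r = Rabs eta / vdist (Y k xi) (Y k (xi - eta)))) as [fY [HfY1 HfY2]].
  { exists 1. left; auto. }
  { exists (1 + B). exact Bound. }
  exists fY. split; [split; [|split; auto]|apply HfY2; exact Bound].
  intros k xi eta Hk Hxi Heta Hne. apply HY; auto.
Qed.

Lemma L2third_nonneg z b : L2third z b -> 0 <= b.
Proof. intros (z1 & z2 & _ & _ & S & _ & ->). apply sqrt_pos. Qed.

Lemma param_bounds_family N Z Y f (a b : nat -> R) :
  (forall k, (k < N)%nat -> periodic (Z k)) ->
  (forall k, (k < N)%nat -> Linf (Z k) (a k) /\ L2third (Z k) (b k)) -> FVal N Z f ->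
  (forall k, (k < N)%nat -> const_speed_param (curve_interior (Z k)) (Y k)) ->
  exists aY bY : nat -> R, forall k, (k < N)%nat -> param_bounds (Z k) (Y k) f (a k) (b k) (aY k) (bY k).
Proof.
  intros Pz Hab HF HY.
  destruct (choice (fun k (p : R * R) => (k < N)%nat ->
              param_bounds (Z k) (Y k) f (a k) (b k) (fst p) (snd p))) as [ab Hpb].
  { intros k. destruct (lt_dec k N) as [Hk|Hk]; [|exists (0, 0); intros; contradiction].
    destruct (Hab k Hk) as [Ha Hb].
    destruct (param_norms N Z f k _ _ (Y k) Hk (Pz k Hk) Ha Hb HF (HY k Hk)) as (aY & bY & P).
    exists (aY, bY). auto. }
  exists (fun k => fst (ab k)), (fun k => snd (ab k)). auto.
Qed.

Lemma triple_norm_arith hY dY fY h f w : 0 < dY -> hY <= (1 + 2 * riesz_const) * w ^ 8 -> / dY <= w ->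
  fY <= 1 + 48 * f * f * h -> 0 <= f <= w -> 0 <= h <= w -> 1 <= w ->
  hY + / dY + fY <= (2 * riesz_const + 100) * w ^ 8.
Proof.
  intros HdY HhY Hd HfY Hf Hh Hw.
  assert (Hw8 : forall n, (n <= 8)%nat -> 1 <= w ^ n <= w ^ 8).
  { intros n Hn. split; [rewrite <- (pow1 n); apply pow_incr; lra|apply Rle_pow; auto]. }
  assert (f * f * h <= w ^ 3).
  { replace (w ^ 3) with (w * w * w) by ring.
    apply Rmult_le_compat; [nra|lra|apply Rmult_le_compat; lra|lra]. }
  destruct (Hw8 3%nat ltac:(lia)). destruct (Hw8 1%nat ltac:(lia)). simpl in *.
  assert (HK : 0 <= riesz_const) by (unfold riesz_const; lra).
  nra.
Qed.

Theorem lemma4p2 :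
  exists C : R, 1 <= C /\
    forall (N : nat) (Z : nat -> curve) (w : R),
      (1 <= N)%nat ->
      triple_norm N Z w ->
      forall Y : nat -> curve,
        (forall k, (k < N)%nat -> const_speed_param (curve_interior (Z k)) (Y k)) ->
        exists v, triple_norm N Y v /\ v <= C * w ^ 8.
Proof.
  exists (2 * riesz_const + 100). split; [unfold riesz_const; lra|].
  intros N Z w HN (h & d & f & (Pz & a & b & Hab & Eh) & Hd & Hd0 & HF & ->) Y HY.
  assert (Hf : 1 <= f) by (apply HF; left; auto).
  assert (Hb0 : forall k, (k < N)%nat -> 0 <= b k) by (intros k Hk; eapply L2third_nonneg, Hab, Hk).
  assert (Hbh : forall k, (k < N)%nat -> b k <= h) by (intros; rewrite Eh; apply sqrt_sumN_ge_term; auto).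
  assert (Hh0 : 0 <= h) by (rewrite Eh; apply sqrt_pos).
  assert (Hid : 0 < / d) by (apply Rinv_0_lt_compat; lra).
  destruct (param_bounds_family N Z Y f a b Pz Hab HF HY) as (aY & bY & Hpb).
  destruct (deltaVal_of_on_curves N Z Y d Pz) as [dY [HdY Hdd]]; [intros k t Hk; apply (Hpb k Hk)|auto|].
  destruct (FVal_of_bound N Y (48 * f * f * h)) as [fY [HfY HfYb]]; [nra| |].
  { intros k xi eta Hk Hxi Heta Hne. destruct (Hpb k Hk) as (_ & _ & _ & _ & _ & _ & HFk).
    destruct (HFk xi eta Hxi Heta Hne) as [Hinj Hq]. split; auto.
    eapply Rle_trans; [apply Hq|]. apply Rmult_le_compat_l; [nra|auto]. }
  set (hY := sqrt (sumN N (fun k => aY k * aY k + bY k * bY k))).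
  exists (hY + / dY + fY). split.
  - exists hY, dY, fY. split; [|split; [auto|split; [lra|split; [auto|reflexivity]]]].
    split; [intros k Hk; apply (HY k Hk)|]. exists aY, bY. split; [|reflexivity].
    intros k Hk. split; apply (Hpb k Hk).
  - apply triple_norm_arith with h f; try lra.
    + apply (H3norm_bound N a b aY bY f h); try lra.
      intros k Hk. destruct (Hpb k Hk) as (_ & _ & Ha & _ & Hb & _). auto.
    + apply Rle_trans with (/ d); [apply Rinv_le_contravar|]; lra.
Qed.
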